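(* Consider the ellipse $\mathcal{E}_{e_0,c}$ and let $\mu_1(\varphi)=a_0e_h(\varphi)+a_1e_{\tau1}(\varphi)+b_1e_{\tau2}(\varphi)+a_2e_{hr}(\varphi)+b_2e_r(\varphi)$, where $a_0,a_1,b_1,a_2,b_2$ are sufficiently small. Then there exist a constant $C=C(e_0,c)$ and an ellipse $\widetilde{\mathcal{E}}=\mathcal{E}_{e_0,c}+\mu_{\widetilde{\mathcal{E}}}$ such that $\|\mu_1-\mu_{\widetilde{\mathcal{E}}}\|_{C^1}\le C\|\mu_1\|_{C^1}^2$.
   Context: $\mathcal{E}_{e_0,c}$ is the ellipse $x^2/a^2+y^2/b^2=1$, $0<b\le a$, eccentricity $e_0=\sqrt{1-b^2/a^2}\in[0,1)$, semi-focal distance $c=\sqrt{a^2-b^2}$; in elliptic coordinates $x=c\cosh\mu\cos\varphi$, $y=c\sinh\mu\sin\varphi$ it is $\{\mu=\mu_0\}$ with $\cosh\mu_0=1/e_0$. For a $2\pi$-periodic function $\nu$, $\mathcal{E}_{e_0,c}+\nu$ denotes the curve $\{(c\cosh(\mu_0+\nu(\varphi))\cos\varphi,\;c\sinh(\mu_0+\nu(\varphi))\sin\varphi)\}$. Elliptic motions: $e_h(\varphi)=\frac{1}{1-e_0^2\cos^2\varphi}$, $e_{\tau1}=\cos\varphi\,e_h$, $e_{\tau2}=\sin\varphi\,e_h$, $e_r=\sin(2\varphi)e_h$, $e_{hr}=\cos(2\varphi)e_h$. *)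

From Stdlib Require Import Reals Lra.
From Coquelicot Require Import Coquelicot.
Open Scope R_scope.

(* mu_0 = arccosh (1/e0), i.e. cosh mu_0 = 1/e0, mu_0 >= 0. *)
Definition mu0 (e0 : R) : R := ln (/ e0 + sqrt ((/ e0) ^ 2 - 1)).

Definition perturbed_curve (e0 c : R) (nu : R -> R) : R * R -> Prop :=
  fun p => exists phi : R,
    p = (c * cosh (mu0 e0 + nu phi) * cos phi,
         c * sinh (mu0 e0 + nu phi) * sin phi).

Definition is_ellipse (S : R * R -> Prop) : Prop :=
  exists (a11 a12 a21 a22 v1 v2 : R),
    a11 * a22 - a12 * a21 <> 0 /\
    forall p : R * R,
      S p <-> exists t : R,
        p = (a11 * cos t + a12 * sin t + v1, a21 * cos t + a22 * sin t + v2).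

Definition e_h (e0 phi : R) : R := / (1 - e0 ^ 2 * (cos phi) ^ 2).
Definition e_tau1 (e0 phi : R) : R := cos phi * e_h e0 phi.
Definition e_tau2 (e0 phi : R) : R := sin phi * e_h e0 phi.
Definition e_r (e0 phi : R) : R := sin (2 * phi) * e_h e0 phi.
Definition e_hr (e0 phi : R) : R := cos (2 * phi) * e_h e0 phi.

(* sup_phi |f phi| (in the extended reals, +oo if unbounded). *)
Definition sup_abs (f : R -> R) : Rbar :=
  Lub_Rbar (fun y => exists x : R, y = Rabs (f x)).

Definition C1norm (f : R -> R) : Rbar :=
  Rbar_plus (sup_abs f) (sup_abs (Derive f)).

Definition periodic_C1 (nu : R -> R) : Prop :=
  (forall x, nu (x + 2 * PI) = nu x) /\
  (forall x, ex_derive nu x) /\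
  (forall x, continuous (Derive nu) x).

From Stdlib Require Import Reals Lra Psatz.
From Coquelicot Require Import Coquelicot.
Open Scope R_scope.

(* In coordinates [g] in which [E_{e0,c}] is the unit circle, a nearby ellipse is
   [|(I + P) g + w| = 1] with [P] symmetric, i.e. five small parameters.  Writing its
   points as [(mu0 + s, φ)] in elliptic coordinates, its equation [F(s, φ) = 0] has
   [∂F/∂s] bounded below near [s = 0], so an implicit function argument gives a unique
   periodic [C^1] solution [s = nu(φ)].  Expanding [F] to second order,
   [F = kappa s rho(φ) + Lin(φ) + O(eps^2)], so [nu] equals the linear term
   [mu_lin = - Lin / (kappa rho)] up to [O(eps^2)] in [C^1], where [eps] bounds the
   parameters.  Finally [mu_lin] ranges exactly over the span of the five elliptic
   motions, and the coefficients of an elliptic motion are bounded by its sup norm. *)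

Lemma Rabs_plus_le a b A B : Rabs a <= A -> Rabs b <= B -> Rabs (a + b) <= A + B.
Proof. intros; eapply Rle_trans; [apply Rabs_triang | lra]. Qed.

Lemma Rabs_minus_le a b A B : Rabs a <= A -> Rabs b <= B -> Rabs (a - b) <= A + B.
Proof. intros; eapply Rle_trans; [apply Rabs_triang |]; rewrite Rabs_Ropp; lra. Qed.

Lemma Rabs_opp_le a A : Rabs a <= A -> Rabs (- a) <= A.
Proof. now rewrite Rabs_Ropp. Qed.

Lemma Rabs_mult_le a b A B : Rabs a <= A -> Rabs b <= B -> Rabs (a * b) <= A * B.
Proof. intros; rewrite Rabs_mult; apply Rmult_le_compat; auto using Rabs_pos. Qed.

Lemma Rabs_div_le a b A B : Rabs a <= A -> Rabs (/ b) <= B -> Rabs (a / b) <= A * B.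
Proof. intros; now apply Rabs_mult_le. Qed.

Lemma Rabs_pow_le a A n : Rabs a <= A -> Rabs (a ^ n) <= A ^ n.
Proof. intros; rewrite <- RPow_abs; apply pow_incr; auto using Rabs_pos. Qed.

(* Bounds [Rabs t] by the expression obtained from [t] by replacing every atom
   with the bound found in the context (or with its own absolute value). *)
Ltac bound_abs := first
  [ eassumption
  | lazymatch goal with
    | |- Rabs (_ + _) <= _ => eapply Rabs_plus_le; bound_abs
    | |- Rabs (_ - _) <= _ => eapply Rabs_minus_le; bound_abs
    | |- Rabs (- _) <= _ => eapply Rabs_opp_le; bound_abs
    | |- Rabs (_ * _) <= _ => eapply Rabs_mult_le; bound_abs
    | |- Rabs (_ / _) <= _ => eapply Rabs_div_le; bound_abs
    | |- Rabs (_ ^ _) <= _ => eapply Rabs_pow_le; bound_abs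
    | |- Rabs _ <= _ => apply Rle_refl
    end ].

Ltac bound_abs_by_ring := eapply Rle_trans; [bound_abs |]; apply Req_le; ring.

(* Solves [U <= ?K * eps ^ n] when [U] is homogeneous of degree [n] in [eps],
   by instantiating [?K] with [U] at [eps = 1]. *)
Ltac bound_homogeneous eps :=
  match goal with |- ?U <= ?K * _ =>
    let f := eval pattern eps in U in
    match f with ?F _ =>
      let V := eval cbv beta in (F 1) in
      unify K V; apply Req_le; ring
    end end.

Lemma continuous_eps_delta (f : R -> R) x : continuous f x ->
  forall eps, 0 < eps ->
  exists d, 0 < d /\ forall u, Rabs (u - x) < d -> Rabs (f u - f x) < eps.
Proof.
intros Hf eps Heps.
destruct (Hf (ball (f x) eps)) as [d Hd].
{ apply (locally_ball (f x) (mkposreal _ Heps)). }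
exists d; split; [apply cond_pos |].
intros u Hu; apply (Hd u), Hu.
Qed.

Lemma continuous2_eps_delta (f : R * R -> R) x y : continuous f (x, y) ->
  forall eps, 0 < eps ->
  exists d, 0 < d /\ forall u v, Rabs (u - x) < d -> Rabs (v - y) < d ->
    Rabs (f (u, v) - f (x, y)) < eps.
Proof.
intros Hf eps Heps.
destruct (Hf (ball (f (x, y)) eps)) as [d Hd].
{ apply (locally_ball (f (x, y)) (mkposreal _ Heps)). }
exists d; split; [apply cond_pos |].
intros u v Hu Hv; apply (Hd (u, v)); split; [exact Hu | exact Hv].
Qed.

Lemma is_derive_continuity_pt (f : R -> R) x l : is_derive f x l -> continuity_pt f x.
Proof.
intros H; apply continuity_pt_filterlim, (ex_derive_continuous (V := R_NormedModule)).
now exists l.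
Qed.

Lemma continuous_of_ex_derive (f : R -> R) x : ex_derive f x -> continuous f x.
Proof. apply (ex_derive_continuous (V := R_NormedModule)). Qed.

Lemma Rdiv_sub_le Q S P S0 m m0 : 0 < m -> m <= S -> 0 < m0 -> m0 <= S0 ->
  Rabs (Q / S - P / S0) <= Rabs (Q - P) / m + Rabs P * Rabs (S - S0) / (m * m0).
Proof.
intros Hm HS Hm0 HS0.
replace (Q / S - P / S0) with ((Q - P) / S + P * (S0 - S) / (S * S0)) by (field; lra).
eapply Rle_trans; [apply Rabs_triang |].
apply Rplus_le_compat; unfold Rdiv; rewrite !Rabs_mult, Rabs_inv.
- apply Rmult_le_compat_l; [apply Rabs_pos |].
  rewrite Rabs_right by lra; apply Rinv_le_contravar; lra.
- rewrite <- Rabs_minus_sym, (Rabs_right (S * S0)) by nra.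
  apply Rmult_le_compat_l; [apply Rmult_le_pos; apply Rabs_pos |].
  apply Rinv_le_contravar; [nra | apply Rmult_le_compat; lra].
Qed.

Lemma Rdiv_sub_lt Q S P S0 m eps : 0 < m -> m <= S -> m <= S0 ->
  Rabs (Q - P) < eps * m / 2 -> Rabs (S - S0) < eps * (m * m) / (2 * (Rabs P + 1)) ->
  Rabs (Q / S - P / S0) < eps.
Proof.
intros Hm HS HS0 HQ HD.
assert (HP : 0 < Rabs P + 1) by (pose proof (Rabs_pos P); lra).
eapply Rle_lt_trans; [apply (Rdiv_sub_le _ _ _ _ m m); lra |].
assert (Hterm1 : Rabs (Q - P) / m < eps / 2).
{ apply (Rmult_lt_reg_r m); [lra |].
  replace (Rabs (Q - P) / m * m) with (Rabs (Q - P)) by (field; lra); lra. }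
assert (Hterm2 : Rabs P * Rabs (S - S0) / (m * m) <= eps / 2).
{ apply (Rmult_le_reg_r (m * m)); [nra |].
  replace (Rabs P * Rabs (S - S0) / (m * m) * (m * m)) with (Rabs P * Rabs (S - S0))
    by (field; lra).
  apply Rle_trans with ((Rabs P + 1) * (eps * (m * m) / (2 * (Rabs P + 1)))).
  - apply Rmult_le_compat; try apply Rabs_pos; lra.
  - apply Req_le; field; lra. }
lra.
Qed.

Lemma Rabs_div_le_lb a b B m : 0 < m -> m <= b -> Rabs a <= B -> Rabs (a / b) <= B / m.
Proof.
intros; unfold Rdiv; rewrite Rabs_mult, Rabs_inv, (Rabs_right b) by lra.
apply Rmult_le_compat; [apply Rabs_pos | left; apply Rinv_0_lt_compat; lra | easy |].
apply Rinv_le_contravar; lra.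
Qed.

Lemma continuous_pow {U : UniformSpace} (f : U -> R) n x :
  continuous f x -> continuous (fun z => f z ^ n) x.
Proof.
intros Hf; induction n as [| n IH]; simpl.
- apply continuous_const.
- now apply (continuous_mult f (fun z => f z ^ n)).
Qed.

Ltac continuity2 := first
  [ apply continuous_const
  | apply continuous_fst
  | apply continuous_snd
  | lazymatch goal with
    | |- continuous (fun z => @?f z + @?g z) _ => apply (continuous_plus f g); continuity2
    | |- continuous (fun z => @?f z - @?g z) _ => apply (continuous_minus f g); continuity2
    | |- continuous (fun z => @?f z * @?g z) _ => apply (continuous_mult f g); continuity2
    | |- continuous (fun z => - @?f z) _ => apply (continuous_opp f); continuity2
    | |- continuous (fun z => @?f z / ?b) _ => apply (continuous_mult f (fun _ => / b)); continuity2
    | |- continuous (fun z => @?f z ^ _) _ => apply (continuous_pow f); continuity2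
    | |- continuous (fun z => ?u (@?f z)) _ =>
        apply (continuous_comp f u); [continuity2 |
          apply continuous_of_ex_derive; unfold cosh, sinh; auto_derive; auto]
    end ].

(** * An implicit function theorem *)

Section ImplicitFunction.

Variables (F Fs Fφ : R -> R -> R) (r m : R).
Hypotheses (r_gt0 : 0 < r) (m_gt0 : 0 < m).
Hypothesis F_left_neg : forall φ, F (- r) φ < 0.
Hypothesis F_right_pos : forall φ, 0 < F r φ.
Hypothesis F_derive_s : forall s φ, is_derive (fun s => F s φ) s (Fs s φ).
Hypothesis Fs_ge : forall s φ, - r <= s <= r -> m <= Fs s φ.
Hypothesis F_derive_φ : forall s φ, is_derive (fun φ => F s φ) φ (Fφ s φ).
Hypothesis Fs_continuous : forall s φ, continuous (fun z => Fs (fst z) (snd z)) (s, φ).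
Hypothesis Fφ_continuous : forall s φ, continuous (fun z => Fφ (fst z) (snd z)) (s, φ).

Lemma F_increment_ge φ s1 s2 : - r <= s1 -> s1 <= s2 -> s2 <= r ->
  m * (s2 - s1) <= F s2 φ - F s1 φ.
Proof.
intros H1 H2 H3.
destruct (MVT_gen (fun s => F s φ) s1 s2 (fun s => Fs s φ)) as [c [Hc ->]].
- intros; apply F_derive_s.
- intros; eapply is_derive_continuity_pt, F_derive_s.
- rewrite Rmin_left, Rmax_right in Hc by lra.
  apply Rmult_le_compat_r; [lra | apply Fs_ge; lra].
Qed.

Lemma F_increment_abs_ge φ s1 s2 : - r <= s1 <= r -> - r <= s2 <= r ->
  m * Rabs (s2 - s1) <= Rabs (F s2 φ - F s1 φ).
Proof.
intros H1 H2; destruct (Rle_dec s1 s2).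
- pose proof (F_increment_ge φ s1 s2).
  rewrite !Rabs_right by nra; nra.
- pose proof (F_increment_ge φ s2 s1).
  rewrite !Rabs_left1 by nra; nra.
Qed.

Lemma implicit_root_sig φ : {s | - r <= s <= r /\ F s φ = 0}.
Proof.
apply IVT; auto; [| lra].
intros s; eapply is_derive_continuity_pt, F_derive_s.
Qed.

Definition root φ := proj1_sig (implicit_root_sig φ).

Lemma root_bounds φ : - r <= root φ <= r.
Proof. exact (proj1 (proj2_sig (implicit_root_sig φ))). Qed.

Lemma F_root φ : F (root φ) φ = 0.
Proof. exact (proj2 (proj2_sig (implicit_root_sig φ))). Qed.

Lemma root_dist_le φ s : - r <= s <= r -> m * Rabs (s - root φ) <= Rabs (F s φ).
Proof.
intros Hs; pose proof (F_increment_abs_ge φ (root φ) s (root_bounds φ) Hs).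
now rewrite F_root, Rminus_0_r in H.
Qed.

Lemma root_unique φ s : - r <= s <= r -> F s φ = 0 -> s = root φ.
Proof.
intros Hs HF; pose proof (root_dist_le φ s Hs); rewrite HF, Rabs_R0 in H.
pose proof (Rabs_pos (s - root φ)).
assert (Rabs (s - root φ) = 0) by nra.
now apply Rminus_diag_uniq, Rabs_eq_0.
Qed.

Lemma root_mvt φ s : - r <= s <= r -> exists ξ, - r <= ξ <= r /\
  Rabs (ξ - s) <= Rabs (root φ - s) /\ root φ - s = - F s φ / Fs ξ φ.
Proof.
intros Hs; pose proof (root_bounds φ) as Hn.
destruct (MVT_gen (fun s => F s φ) s (root φ) (fun s => Fs s φ)) as [ξ [Hξ Heq]].
- intros; apply F_derive_s.
- intros; eapply is_derive_continuity_pt, F_derive_s.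
- simpl in Heq; rewrite F_root in Heq.
  assert (Hr : - r <= ξ <= r).
  { split; [eapply Rle_trans, Hξ; apply Rmin_glb | eapply Rle_trans; [apply Hξ | apply Rmax_lub]]; lra. }
  exists ξ; split; [exact Hr | split].
  + destruct (Rle_dec s (root φ)).
    * rewrite Rmin_left, Rmax_right in Hξ by lra; rewrite !Rabs_right by lra; lra.
    * rewrite Rmin_right, Rmax_left in Hξ by lra; rewrite !Rabs_left1 by lra; lra.
  + pose proof (Fs_ge ξ φ Hr); field_simplify_eq; lra.
Qed.

Lemma root_difference φ0 h : exists ξ, - r <= ξ <= r /\
  m * Rabs (ξ - root φ0) <= Rabs (F (root φ0) (φ0 + h)) /\
  root (φ0 + h) - root φ0 = - F (root φ0) (φ0 + h) / Fs ξ (φ0 + h).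
Proof.
pose proof (root_bounds φ0) as Hn0.
destruct (root_mvt (φ0 + h) (root φ0) Hn0) as [ξ [Hξ [Hξn Hdiff]]].
exists ξ; split; [exact Hξ | split; [| exact Hdiff]].
pose proof (root_dist_le (φ0 + h) (root φ0) Hn0) as Hdist; rewrite Rabs_minus_sym in Hdist.
eapply Rle_trans; [apply Rmult_le_compat_l; [lra | exact Hξn] | exact Hdist].
Qed.

Lemma root_derive φ0 : is_derive root φ0 (- Fφ (root φ0) φ0 / Fs (root φ0) φ0).
Proof.
apply is_derive_Reals; intros eps Heps.
set (n0 := root φ0); set (S0 := Fs n0 φ0); set (P0 := Fφ n0 φ0).
assert (HS0 : m <= S0) by (apply Fs_ge, root_bounds).
assert (HP0 : 0 < Rabs P0 + 1) by (pose proof (Rabs_pos P0); lra).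
assert (He1 : 0 < eps * m / 2) by nra.
assert (He2 : 0 < eps * (m * m) / (2 * (Rabs P0 + 1))) by (apply Rdiv_lt_0_compat; nra).
destruct (proj1 (is_derive_Reals _ _ _) (F_derive_φ n0 φ0) _ He1) as [d1 Hd1].
destruct (continuous2_eps_delta _ _ _ (Fs_continuous n0 φ0) _ He2) as [d2 [Hd2 Hd2']].
assert (He3 : 0 < m * d2) by nra.
destruct (continuous_eps_delta (fun φ => F n0 φ) φ0
  (continuous_of_ex_derive _ _ (ex_intro _ _ (F_derive_φ n0 φ0))) _ He3) as [d3 [Hd3 Hd3']].
assert (Hd : 0 < Rmin d1 (Rmin d2 d3)) by (pose proof (cond_pos d1); repeat apply Rmin_pos; lra).
exists (mkposreal _ Hd); intros h Hh0 Hh; simpl in Hh.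
pose proof (Rmin_l d1 (Rmin d2 d3)); pose proof (Rmin_r d1 (Rmin d2 d3)).
pose proof (Rmin_l d2 d3); pose proof (Rmin_r d2 d3).
assert (HF0 : F n0 φ0 = 0) by apply F_root.
(* [root (φ0 + h) - n0 = - F n0 (φ0 + h) / Fs ξ (φ0 + h)] with [ξ] squeezed towards [n0] *)
destruct (root_difference φ0 h) as [ξ [Hξ [Hξn Hdiff]]]; fold n0 in Hξn, Hdiff.
assert (Hξd : Rabs (ξ - n0) < d2).
{ enough (Rabs (F n0 (φ0 + h)) < m * d2) by nra.
  rewrite <- (Rminus_0_r (F n0 (φ0 + h))), <- HF0.
  apply Hd3'; replace (φ0 + h - φ0) with h by ring; lra. }
set (Q := F n0 (φ0 + h) / h).
assert (HSξ : m <= Fs ξ (φ0 + h)) by now apply Fs_ge.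
assert (HDS : Rabs (Fs ξ (φ0 + h) - S0) < eps * (m * m) / (2 * (Rabs P0 + 1))).
{ apply (Hd2' ξ (φ0 + h)); [lra | replace (φ0 + h - φ0) with h by ring; lra]. }
assert (HQ : Rabs (Q - P0) < eps * m / 2).
{ unfold Q; rewrite <- (Rminus_0_r (F n0 (φ0 + h))), <- HF0; apply Hd1; lra. }
replace ((root (φ0 + h) - n0) / h - - P0 / S0) with (- (Q / Fs ξ (φ0 + h) - P0 / S0))
  by (unfold Q; rewrite Hdiff; field; lra).
rewrite Rabs_Ropp; apply Rdiv_sub_lt with m; auto.
Qed.

Lemma root_derive_continuous φ :
  continuous (fun φ => - Fφ (root φ) φ / Fs (root φ) φ) φ.
Proof.
assert (Hroot : forall φ, continuous root φ).
{ intros ψ; apply continuous_of_ex_derive; eexists; apply root_derive. }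
assert (C1 : continuous (fun φ => Fφ (root φ) φ) φ).
{ apply (continuous_comp_2 root (fun x => x) Fφ); auto using continuous_id. }
assert (C2 : continuous (fun φ => Fs (root φ) φ) φ).
{ apply (continuous_comp_2 root (fun x => x) Fs); auto using continuous_id. }
assert (Hne : Fs (root φ) φ <> 0) by (pose proof (Fs_ge _ φ (root_bounds φ)); lra).
apply continuity_pt_filterlim in C1, C2; apply continuity_pt_filterlim.
apply continuity_pt_div; auto.
now apply continuity_pt_opp.
Qed.

End ImplicitFunction.

Ltac neq0 := repeat split; first [apply Rgt_not_eq; nra | apply Rlt_not_eq; nra | idtac].

Lemma Rabs_lin_comb_le a b x y : 0 <= a -> 0 <= b ->
  Rabs (a * x + b * y) <= a * Rabs x + b * Rabs y.
Proof.
intros Ha Hb; eapply Rle_trans; [apply Rabs_triang |].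
rewrite !Rabs_mult, (Rabs_right a), (Rabs_right b) by lra; lra.
Qed.

Lemma Rabs_cos_le φ : Rabs (cos φ) <= 1.
Proof. apply Rabs_le, COS_bound. Qed.

Lemma Rabs_sin_le φ : Rabs (sin φ) <= 1.
Proof. apply Rabs_le, SIN_bound. Qed.

Lemma cosh_pos x : 0 < cosh x.
Proof. unfold cosh; pose proof (exp_pos x); pose proof (exp_pos (- x)); lra. Qed.

Lemma cosh_sq x : cosh x ^ 2 = 1 + sinh x ^ 2.
Proof. unfold cosh, sinh; rewrite exp_Ropp; pose proof (exp_pos x); field; lra. Qed.

Lemma cosh_plus a b : cosh (a + b) = cosh a * cosh b + sinh a * sinh b.
Proof.
unfold cosh, sinh; rewrite !exp_Ropp, exp_plus.
pose proof (exp_pos a); pose proof (exp_pos b); field; lra.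
Qed.

Lemma sinh_plus a b : sinh (a + b) = sinh a * cosh b + cosh a * sinh b.
Proof.
unfold cosh, sinh; rewrite !exp_Ropp, exp_plus.
pose proof (exp_pos a); pose proof (exp_pos b); field; lra.
Qed.

Lemma cosh_sqrt x : cosh x = sqrt (1 + sinh x ^ 2).
Proof. rewrite <- cosh_sq, sqrt_pow2; auto; left; apply cosh_pos. Qed.

Lemma is_derive_cosh x : is_derive cosh x (sinh x).
Proof. apply is_derive_Reals, derivable_pt_lim_cosh. Qed.

Lemma is_derive_sinh x : is_derive sinh x (cosh x).
Proof. apply is_derive_Reals, derivable_pt_lim_sinh. Qed.

Lemma MVT_from_0 (f df : R -> R) s : (forall x, is_derive f x (df x)) ->
  exists c, Rabs c <= Rabs s /\ f s - f 0 = df c * s.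
Proof.
intros Hd; destruct (MVT_gen f 0 s df) as [c [Hc Heq]].
- intros; apply Hd.
- intros; eapply is_derive_continuity_pt, Hd.
- exists c; split; [| rewrite Heq; ring].
  destruct (Rle_dec 0 s).
  + rewrite Rmin_left, Rmax_right in Hc by lra; rewrite !Rabs_right by lra; lra.
  + rewrite Rmin_right, Rmax_left in Hc by lra; rewrite !Rabs_left1 by lra; lra.
Qed.

Lemma exp_le_3_of_Rabs_le_1 s : Rabs s <= 1 -> exp s <= 3.
Proof.
intros Hs; apply Rle_trans with (exp 1); [| apply exp_le_3].
apply Rabs_le_between in Hs; destruct (Req_dec s 1) as [-> | Hne]; [lra |].
left; apply exp_increasing; lra.
Qed.

Lemma Rabs_cosh_le_3 s : Rabs s <= 1 -> Rabs (cosh s) <= 3.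
Proof.
intros Hs; rewrite Rabs_right by (left; apply cosh_pos); unfold cosh.
pose proof (exp_le_3_of_Rabs_le_1 s Hs).
pose proof (exp_le_3_of_Rabs_le_1 (- s) ltac:(now rewrite Rabs_Ropp)); lra.
Qed.

Lemma Rabs_sinh_le_3 s : Rabs s <= 1 -> Rabs (sinh s) <= 3.
Proof.
intros Hs; unfold sinh.
pose proof (exp_le_3_of_Rabs_le_1 s Hs).
pose proof (exp_le_3_of_Rabs_le_1 (- s) ltac:(now rewrite Rabs_Ropp)).
pose proof (exp_pos s); pose proof (exp_pos (- s)); apply Rabs_le; lra.
Qed.

Lemma Rabs_sinh_le s : Rabs s <= 1 -> Rabs (sinh s) <= 3 * Rabs s.
Proof.
intros Hs; destruct (MVT_from_0 sinh cosh s is_derive_sinh) as [c [Hc E]].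
rewrite sinh_0, Rminus_0_r in E; rewrite E, Rabs_mult.
apply Rmult_le_compat_r; [apply Rabs_pos | apply Rabs_cosh_le_3; lra].
Qed.

Lemma Rabs_cosh_sub_1_le s : Rabs s <= 1 -> Rabs (cosh s - 1) <= 3 * s ^ 2.
Proof.
intros Hs; destruct (MVT_from_0 cosh sinh s is_derive_cosh) as [c [Hc E]].
rewrite cosh_0 in E; rewrite E, Rabs_mult, <- (pow2_abs s).
pose proof (Rabs_sinh_le c ltac:(lra)); pose proof (Rabs_pos s); pose proof (Rabs_pos c).
nra.
Qed.

Lemma Rabs_sinh_sub_le s : Rabs s <= 1 -> Rabs (sinh s - s) <= 3 * s ^ 2.
Proof.
intros Hs; destruct (MVT_from_0 (fun x => sinh x - x) (fun x => cosh x - 1) s) as [c [Hc E]].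
{ intros x; apply (is_derive_minus sinh (fun x => x)); [apply is_derive_sinh | apply (is_derive_id (K := R_AbsRing))]. }
rewrite sinh_0, Rminus_0_r, Rminus_0_r in E; rewrite E, Rabs_mult, <- (pow2_abs s).
pose proof (Rabs_cosh_sub_1_le c ltac:(lra)); pose proof (Rabs_pos s); pose proof (Rabs_pos c).
rewrite <- (pow2_abs c) in H; nra.
Qed.

Definition trig2 a0 a1 b1 a2 b2 φ :=
  a0 + a1 * cos φ + b1 * sin φ + a2 * (cos φ ^ 2 - sin φ ^ 2) + b2 * (2 * sin φ * cos φ).

Lemma trig2_coeffs_le a0 a1 b1 a2 b2 M : (forall φ, Rabs (trig2 a0 a1 b1 a2 b2 φ) <= M) ->
  Rabs a0 <= 2 * M /\ Rabs a1 <= 2 * M /\ Rabs b1 <= 2 * M /\ Rabs a2 <= 2 * M /\ Rabs b2 <= 2 * M.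
Proof.
intros HT; unfold trig2 in HT.
pose proof (HT 0) as T0; pose proof (HT PI) as T1; pose proof (HT (PI / 2)) as T2.
pose proof (HT (- (PI / 2))) as T3; pose proof (HT (PI / 4)) as T4; pose proof (HT (PI / 4 + PI)) as T5.
rewrite cos_0, sin_0 in T0; rewrite cos_PI, sin_PI in T1; rewrite cos_PI2, sin_PI2 in T2.
rewrite cos_neg, sin_neg, cos_PI2, sin_PI2 in T3; rewrite neg_cos, neg_sin in T5.
rewrite sin_cos_PI4 in T4, T5.
assert (Hk : 2 * cos (PI / 4) ^ 2 = 1).
{ rewrite cos_PI4; unfold Rdiv; rewrite Rmult_1_l, pow_inv, pow2_sqrt by lra; field. }
replace (a0 + a1 * cos (PI / 4) + b1 * cos (PI / 4) + a2 * (cos (PI / 4) ^ 2 - cos (PI / 4) ^ 2)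
  + b2 * (2 * cos (PI / 4) * cos (PI / 4)))
  with (a0 + (a1 + b1) * cos (PI / 4) + b2 * (2 * cos (PI / 4) ^ 2)) in T4 by ring.
replace (a0 + a1 * - cos (PI / 4) + b1 * - cos (PI / 4)
  + a2 * ((- cos (PI / 4)) ^ 2 - (- cos (PI / 4)) ^ 2) + b2 * (2 * - cos (PI / 4) * - cos (PI / 4)))
  with (a0 - (a1 + b1) * cos (PI / 4) + b2 * (2 * cos (PI / 4) ^ 2)) in T5 by ring.
rewrite Hk in T4, T5.
apply Rabs_le_between in T0, T1, T2, T3, T4, T5.
repeat split; apply Rabs_le; nra.
Qed.

Lemma unit_circle_param u w : u ^ 2 + w ^ 2 = 1 -> exists t, cos t = u /\ sin t = w.
Proof.
intros H.
assert (Hu : -1 <= u <= 1) by (split; nra).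
assert (Hs : sqrt (1 - u²) = Rabs w) by (rewrite <- sqrt_Rsqr_abs; f_equal; unfold Rsqr; nra).
destruct (Rle_dec 0 w) as [Hw | Hw].
- exists (acos u); rewrite cos_acos, sin_acos, Hs, Rabs_right by (auto || lra); auto.
- exists (- acos u); rewrite cos_neg, sin_neg, cos_acos, sin_acos, Hs, Rabs_left by (auto || lra).
  split; [reflexivity | ring].
Qed.

(* [Z] is [sinh mu ^ 2] for the elliptic coordinate [mu] of [(x, y)]. *)
Lemma elliptic_sinh_sq c x y : 0 < c -> exists Z, 0 <= Z /\
  c ^ 2 * Z ^ 2 + (c ^ 2 - x ^ 2 - y ^ 2) * Z - y ^ 2 = 0 /\ (Z = 0 -> x ^ 2 + y ^ 2 <= c ^ 2).
Proof.
intros Hc.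
set (b := c ^ 2 - x ^ 2 - y ^ 2).
set (sq := sqrt (b ^ 2 + 4 * c ^ 2 * y ^ 2)).
assert (Hsq2 : sq ^ 2 = b ^ 2 + 4 * c ^ 2 * y ^ 2) by (unfold sq; rewrite pow2_sqrt; nra).
assert (Hsq0 : 0 <= sq) by apply sqrt_pos.
exists ((sq - b) / (2 * c ^ 2)); repeat split.
- apply Rmult_le_pos; [nra | left; apply Rinv_0_lt_compat; nra].
- replace (c ^ 2 * ((sq - b) / (2 * c ^ 2)) ^ 2 + b * ((sq - b) / (2 * c ^ 2)) - y ^ 2)
    with ((sq ^ 2 - b ^ 2 - 4 * c ^ 2 * y ^ 2) / (4 * c ^ 2)) by (field; neq0).
  rewrite Hsq2; unfold Rdiv; ring.
- intros HZ; assert (sq = b); [| unfold b in *; lra].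
  apply (Rmult_eq_reg_r (/ (2 * c ^ 2))); [lra | apply Rinv_neq_0_compat; nra].
Qed.

Lemma elliptic_coordinates c x y : 0 < c -> exists mu φ, 0 <= mu /\
  x = c * cosh mu * cos φ /\ y = c * sinh mu * sin φ.
Proof.
intros Hc; destruct (elliptic_sinh_sq c x y Hc) as [Z [HZ0 [HZq HZx]]].
set (mu := arcsinh (sqrt Z)).
assert (Hsh : sinh mu = sqrt Z) by apply sinh_arcsinh.
assert (Hch : cosh mu = sqrt (1 + Z)) by (rewrite cosh_sqrt, Hsh, pow2_sqrt; auto).
assert (Hmu : 0 <= mu) by (rewrite <- arcsinh_0; apply arcsinh_le, sqrt_pos).
destruct (Req_dec Z 0) as [HZ | HZ].
- assert (Hy : y = 0) by (rewrite HZ in HZq; nra).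
  assert (Hx : -1 <= x / c <= 1).
  { specialize (HZx HZ); rewrite Hy in HZx.
    split; apply (Rmult_le_reg_r c); auto; field_simplify; nra. }
  exists mu, (acos (x / c)); split; auto.
  rewrite Hch, Hsh, HZ, Rplus_0_r, sqrt_1, sqrt_0, cos_acos by auto.
  split; [field; lra | rewrite Hy; ring].
- assert (HZp : 0 < Z) by lra.
  assert (Hs1 : 0 < sqrt (1 + Z)) by (apply sqrt_lt_R0; lra).
  assert (Hs2 : 0 < sqrt Z) by (apply sqrt_lt_R0; lra).
  destruct (unit_circle_param (x / (c * sqrt (1 + Z))) (y / (c * sqrt Z))) as [φ [Hcp Hsp]].
  { unfold Rdiv; rewrite !Rpow_mult_distr, !pow_inv, !Rpow_mult_distr, !pow2_sqrt by lra.
    replace (x ^ 2 * / (c ^ 2 * (1 + Z)) + y ^ 2 * / (c ^ 2 * Z))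
      with ((x ^ 2 * Z + y ^ 2 * (1 + Z)) / (c ^ 2 * (1 + Z) * Z)) by (field; neq0).
    replace (x ^ 2 * Z + y ^ 2 * (1 + Z)) with (c ^ 2 * (1 + Z) * Z) by nra.
    field; neq0. }
  exists mu, φ; split; auto.
  rewrite Hch, Hsh, Hcp, Hsp; split; field; neq0.
Qed.

Lemma Rabs_le_sup_abs (f : R -> R) x : Rbar_le (Finite (Rabs (f x))) (sup_abs f).
Proof.
unfold sup_abs; destruct (Lub_Rbar_correct (fun y => exists x, y = Rabs (f x))) as [Hub _].
apply Hub; now exists x.
Qed.

Lemma sup_abs_le (f : R -> R) B : (forall x, Rabs (f x) <= B) -> Rbar_le (sup_abs f) (Finite B).
Proof.
intros H; unfold sup_abs; destruct (Lub_Rbar_correct (fun y => exists x, y = Rabs (f x))) as [_ Hlub].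
apply Hlub; intros y [x ->]; apply H.
Qed.

Lemma sup_abs_nonneg (f : R -> R) : Rbar_le (Finite 0) (sup_abs f).
Proof. eapply Rbar_le_trans; [| apply (Rabs_le_sup_abs f 0)]; apply Rabs_pos. Qed.

Lemma Rbar_mult_pos_pinfty (C : R) : 0 < C -> Rbar_mult (Finite C) p_infty = p_infty.
Proof.
intros HC; simpl; destruct (Rle_dec 0 C) as [H | H]; [| lra].
destruct (Rle_lt_or_eq_dec 0 C H); [reflexivity | lra].
Qed.

Lemma Rbar_le_pinfty (x : Rbar) : Rbar_le x p_infty.
Proof. now destruct x. Qed.

Lemma C1norm_le_sq (h mu : R -> R) (K : R) : 0 <= K ->
  (forall n, (forall x, Rabs (mu x) <= n) ->
    forall x, Rabs (h x) <= K * n ^ 2 /\ Rabs (Derive h x) <= K * n ^ 2) ->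
  Rbar_le (C1norm h) (Rbar_mult (Finite (2 * K + 1)) (Rbar_mult (C1norm mu) (C1norm mu))).
Proof.
intros HK Hh.
pose proof (sup_abs_nonneg mu) as P1; pose proof (sup_abs_nonneg (Derive mu)) as P2.
unfold C1norm at 2 3.
destruct (sup_abs mu) as [n1 | |] eqn:E1; [| | simpl in P1; contradiction];
  destruct (sup_abs (Derive mu)) as [n2 | |]; simpl in P2; try contradiction;
  (* unless both suprema are finite the right-hand side is [+oo] *)
  try (replace (Rbar_mult (Rbar_plus _ _) (Rbar_plus _ _)) with p_infty by reflexivity;
       rewrite Rbar_mult_pos_pinfty by lra; apply Rbar_le_pinfty).
assert (Hmu : forall x, Rabs (mu x) <= n1).
{ intros x; pose proof (Rabs_le_sup_abs mu x) as Hx; rewrite E1 in Hx; exact Hx. }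
apply Rbar_le_trans with (Finite (K * n1 ^ 2 + K * n1 ^ 2)).
- unfold C1norm; change (Finite (K * n1 ^ 2 + K * n1 ^ 2))
    with (Rbar_plus (Finite (K * n1 ^ 2)) (Finite (K * n1 ^ 2))).
  apply Rbar_plus_le_compat; apply sup_abs_le; intros x; apply (Hh n1 Hmu x).
- simpl in P1 |- *; apply Rle_trans with ((2 * K + 1) * (n1 * n1)); [nra |].
  apply Rmult_le_compat_l; nra.
Qed.

(** * The perturbed ellipse in elliptic coordinates *)

Section EllipticCoordinates.

Variable e : R.
Hypothesis e_range : 0 < e < 1.

Definition ch0 := / e.
Definition sh0 := sqrt ((/ e) ^ 2 - 1).

Lemma inv_e_gt1 : 1 < / e.
Proof. rewrite <- Rinv_1; apply Rinv_lt_contravar; lra. Qed.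

Lemma ch0_pos : 0 < ch0.
Proof. apply Rinv_0_lt_compat; lra. Qed.

Lemma sh0_pos : 0 < sh0.
Proof. pose proof inv_e_gt1; apply sqrt_lt_R0; nra. Qed.

Lemma sh0_sq : sh0 ^ 2 = (/ e) ^ 2 - 1.
Proof. pose proof inv_e_gt1; apply pow2_sqrt; nra. Qed.

Lemma e_sq_sh0_sq : e ^ 2 * (1 + sh0 ^ 2) = 1.
Proof. rewrite sh0_sq; field; lra. Qed.

Ltac ell_pos := pose proof e_range; pose proof ch0_pos; pose proof sh0_pos.

Lemma exp_mu0 : exp (mu0 e) = ch0 + sh0.
Proof. ell_pos; unfold mu0; rewrite exp_ln; [reflexivity | fold sh0 ch0; lra]. Qed.

Lemma exp_opp_mu0 : exp (- mu0 e) = ch0 - sh0.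
Proof.
ell_pos; rewrite exp_Ropp, exp_mu0.
assert (E : (ch0 - sh0) * (ch0 + sh0) = 1) by (ring_simplify; rewrite sh0_sq; unfold ch0; ring).
rewrite <- (Rmult_1_l (/ _)), <- E; field; lra.
Qed.

Lemma cosh_mu0 : cosh (mu0 e) = ch0.
Proof. unfold cosh; rewrite exp_mu0, exp_opp_mu0; field. Qed.

Lemma sinh_mu0 : sinh (mu0 e) = sh0.
Proof. unfold sinh; rewrite exp_mu0, exp_opp_mu0; field. Qed.

Lemma mu0_pos : 0 < mu0 e.
Proof.
ell_pos; apply Rnot_le_lt; intros Hle.
assert (Hsinh : sinh (mu0 e) <= sinh 0).
{ destruct (Req_dec (mu0 e) 0) as [-> | Hne]; [lra | left; apply sinh_lt; lra]. }
rewrite sinh_mu0, sinh_0 in Hsinh; lra.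
Qed.

Definition Cs s := cosh (mu0 e + s).
Definition Ss s := sinh (mu0 e + s).

Lemma Cs_expand s : Cs s = ch0 * cosh s + sh0 * sinh s.
Proof. unfold Cs; rewrite cosh_plus, cosh_mu0, sinh_mu0; ring. Qed.

Lemma Ss_expand s : Ss s = sh0 * cosh s + ch0 * sinh s.
Proof. unfold Ss; rewrite sinh_plus, cosh_mu0, sinh_mu0; ring. Qed.

(* In the coordinates [(x / (c * ch0), y / (c * sh0))] the ellipse [E_{e,c}]
   is the unit circle; [g1, g2] are these coordinates of the point with
   elliptic coordinates [(mu0 e + s, φ)], and [_s], [_φ] mark partial derivatives. *)
Definition g1 s φ := e * Cs s * cos φ.
Definition g2 s φ := Ss s * sin φ / sh0.
Definition g1_s s φ := e * Ss s * cos φ.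
Definition g2_s s φ := Cs s * sin φ / sh0.
Definition g1_φ s φ := - (e * Cs s * sin φ).
Definition g2_φ s φ := Ss s * cos φ / sh0.

(* The perturbed ellipse is [|(I + P) g + w| = 1] with [P = [[p, q], [q, r]]]
   and [w = (w1, w2)]; these five parameters correspond to the five elliptic motions. *)
Definition X1 p q w1 s φ := g1 s φ + (p * g1 s φ + q * g2 s φ + w1).
Definition X2 q r w2 s φ := g2 s φ + (q * g1 s φ + r * g2 s φ + w2).
Definition Feq p q r w1 w2 s φ := X1 p q w1 s φ ^ 2 + X2 q r w2 s φ ^ 2 - 1.
Definition Feq_s p q r w1 w2 s φ :=
  2 * X1 p q w1 s φ * (g1_s s φ + (p * g1_s s φ + q * g2_s s φ))
  + 2 * X2 q r w2 s φ * (g2_s s φ + (q * g1_s s φ + r * g2_s s φ)).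
Definition Feq_φ p q r w1 w2 s φ :=
  2 * X1 p q w1 s φ * (g1_φ s φ + (p * g1_φ s φ + q * g2_φ s φ))
  + 2 * X2 q r w2 s φ * (g2_φ s φ + (q * g1_φ s φ + r * g2_φ s φ)).

(* [kappa * s * rho φ] is the part of [|g|^2 - 1] linear in [s] (see [g_norm]). *)
Definition rho φ := e ^ 2 * cos φ ^ 2 + sin φ ^ 2 / sh0 ^ 2.
Definition rho_φ φ := 2 * sin φ * cos φ * (/ sh0 ^ 2 - e ^ 2).
Definition kappa := 2 * sh0 * ch0.

Ltac unfold_Feq := unfold Feq, Feq_s, Feq_φ, X1, X2, g1, g2, g1_s, g2_s, g1_φ, g2_φ, Cs, Ss.

Lemma Feq_derive_s p q r w1 w2 s φ :
  is_derive (fun s => Feq p q r w1 w2 s φ) s (Feq_s p q r w1 w2 s φ).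
Proof. ell_pos; unfold_Feq; unfold cosh, sinh; auto_derive; auto; field; neq0. Qed.

Lemma Feq_derive_φ p q r w1 w2 s φ :
  is_derive (fun φ => Feq p q r w1 w2 s φ) φ (Feq_φ p q r w1 w2 s φ).
Proof. ell_pos; unfold_Feq; auto_derive; auto; field; neq0. Qed.

Lemma Feq_s_continuous p q r w1 w2 s φ :
  continuous (fun z => Feq_s p q r w1 w2 (fst z) (snd z)) (s, φ).
Proof. unfold_Feq; continuity2. Qed.

Lemma Feq_φ_continuous p q r w1 w2 s φ :
  continuous (fun z => Feq_φ p q r w1 w2 (fst z) (snd z)) (s, φ).
Proof. unfold_Feq; continuity2. Qed.

Lemma Feq_periodic p q r w1 w2 s φ : Feq p q r w1 w2 s (φ + 2 * PI) = Feq p q r w1 w2 s φ.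
Proof.
unfold_Feq.
replace (cos (φ + 2 * PI)) with (cos φ) by (rewrite cos_plus, cos_2PI, sin_2PI; ring).
replace (sin (φ + 2 * PI)) with (sin φ) by (rewrite sin_plus, cos_2PI, sin_2PI; ring).
reflexivity.
Qed.

Lemma g_norm s φ : g1 s φ ^ 2 + g2 s φ ^ 2 - 1 = (Ss s ^ 2 - sh0 ^ 2) * rho φ.
Proof.
ell_pos.
assert (E1 : Cs s ^ 2 - 1 - Ss s ^ 2 = 0) by (unfold Cs, Ss; rewrite cosh_sq; ring).
assert (E2 : e ^ 2 * (1 + sh0 ^ 2) - 1 = 0) by (rewrite e_sq_sh0_sq; ring).
assert (E3 : cos φ ^ 2 + sin φ ^ 2 - 1 = 0) by (rewrite <- (sin2_cos2 φ); unfold Rsqr; ring).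
transitivity ((Ss s ^ 2 - sh0 ^ 2) * rho φ + e ^ 2 * cos φ ^ 2 * (Cs s ^ 2 - 1 - Ss s ^ 2)
   + cos φ ^ 2 * (e ^ 2 * (1 + sh0 ^ 2) - 1) + (cos φ ^ 2 + sin φ ^ 2 - 1)).
- unfold g1, g2, rho; field; neq0.
- rewrite E1, E2, E3; ring.
Qed.

Lemma g_norm_φ s φ :
  2 * (g1 s φ * g1_φ s φ + g2 s φ * g2_φ s φ) = (Ss s ^ 2 - sh0 ^ 2) * rho_φ φ.
Proof.
ell_pos.
assert (E1 : Cs s ^ 2 - 1 - Ss s ^ 2 = 0) by (unfold Cs, Ss; rewrite cosh_sq; ring).
assert (E2 : e ^ 2 * (1 + sh0 ^ 2) - 1 = 0) by (rewrite e_sq_sh0_sq; ring).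
transitivity ((Ss s ^ 2 - sh0 ^ 2) * rho_φ φ
   + 2 * sin φ * cos φ * (- e ^ 2 * (Cs s ^ 2 - 1 - Ss s ^ 2) - (e ^ 2 * (1 + sh0 ^ 2) - 1))).
- unfold g1, g2, g1_φ, g2_φ, rho_φ; field; neq0.
- rewrite E1, E2; ring.
Qed.

Lemma g_norm_s s φ : g1 s φ * g1_s s φ + g2 s φ * g2_s s φ = Cs s * Ss s * rho φ.
Proof. ell_pos; unfold g1, g2, g1_s, g2_s, rho; field; neq0. Qed.

Lemma g1_sub s φ : g1 s φ - cos φ = e * (Cs s - ch0) * cos φ.
Proof. unfold g1, ch0; field; lra. Qed.

Lemma g2_sub s φ : g2 s φ - sin φ = (Ss s - sh0) * sin φ / sh0.
Proof. ell_pos; unfold g2; field; neq0. Qed.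

Lemma g1_φ_sub s φ : g1_φ s φ - - sin φ = - (e * (Cs s - ch0) * sin φ).
Proof. unfold g1_φ, ch0; field; lra. Qed.

Lemma g2_φ_sub s φ : g2_φ s φ - cos φ = (Ss s - sh0) * cos φ / sh0.
Proof. ell_pos; unfold g2_φ; field; neq0. Qed.

Definition Kcs := 3 * (ch0 + sh0).

Lemma Cs_Ss_bounds s eps : Rabs s <= eps -> eps <= 1 ->
  Rabs (Cs s - ch0) <= Kcs * eps /\ Rabs (Ss s - sh0) <= Kcs * eps /\
  Rabs (Cs s) <= Kcs /\ Rabs (Ss s) <= Kcs /\
  Rabs (Ss s - sh0 - ch0 * s) <= Kcs * eps ^ 2.
Proof.
intros Hs He1; ell_pos; unfold Kcs.
assert (Hs1 : Rabs s <= 1) by lra.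
pose proof (Rabs_cosh_le_3 s Hs1); pose proof (Rabs_sinh_le_3 s Hs1).
pose proof (Rabs_sinh_le s Hs1); pose proof (Rabs_cosh_sub_1_le s Hs1).
pose proof (Rabs_sinh_sub_le s Hs1); pose proof (Rabs_pos s).
assert (Hsq : s ^ 2 <= eps ^ 2) by (rewrite <- pow2_abs; apply pow_incr; lra).
assert (Hse : s ^ 2 <= eps) by (rewrite <- pow2_abs; nra).
rewrite Cs_expand, Ss_expand; repeat split.
- replace (ch0 * cosh s + sh0 * sinh s - ch0) with (ch0 * (cosh s - 1) + sh0 * sinh s) by ring.
  eapply Rle_trans; [apply Rabs_lin_comb_le; lra | nra].
- replace (sh0 * cosh s + ch0 * sinh s - sh0) with (sh0 * (cosh s - 1) + ch0 * sinh s) by ring.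
  eapply Rle_trans; [apply Rabs_lin_comb_le; lra | nra].
- eapply Rle_trans; [apply Rabs_lin_comb_le; lra | nra].
- eapply Rle_trans; [apply Rabs_lin_comb_le; lra | nra].
- replace (sh0 * cosh s + ch0 * sinh s - sh0 - ch0 * s)
    with (sh0 * (cosh s - 1) + ch0 * (sinh s - s)) by ring.
  eapply Rle_trans; [apply Rabs_lin_comb_le; lra | nra].
Qed.

Lemma coordinate_bounds s φ eps : Rabs s <= eps -> eps <= 1 ->
  Rabs (g1 s φ) <= Kcs /\ Rabs (g2 s φ) <= Kcs * / sh0 /\
  Rabs (g1_s s φ) <= Kcs /\ Rabs (g2_s s φ) <= Kcs * / sh0 /\
  Rabs (g1_φ s φ) <= Kcs /\ Rabs (g2_φ s φ) <= Kcs * / sh0 /\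
  Rabs (g1 s φ - cos φ) <= Kcs * eps /\ Rabs (g2 s φ - sin φ) <= Kcs * eps * / sh0 /\
  Rabs (g1_φ s φ - - sin φ) <= Kcs * eps /\ Rabs (g2_φ s φ - cos φ) <= Kcs * eps * / sh0.
Proof.
intros Hs He1; ell_pos.
destruct (Cs_Ss_bounds s eps Hs He1) as [HC [HS [HC' [HS' _]]]].
pose proof (Rabs_cos_le φ); pose proof (Rabs_sin_le φ).
assert (Hee : Rabs e <= 1) by (rewrite Rabs_right; lra).
assert (Hi : Rabs (/ sh0) <= / sh0) by (rewrite Rabs_right; [lra | left; apply Rinv_0_lt_compat; lra]).
rewrite g1_sub, g2_sub, g1_φ_sub, g2_φ_sub.
unfold g1, g2, g1_s, g2_s, g1_φ, g2_φ; repeat split; bound_abs_by_ring.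
Qed.

Definition Krho := 2 * (/ sh0 ^ 2 + 1).

Lemma rho_bounds φ : Rabs (rho φ) <= 1 + / sh0 ^ 2 /\ Rabs (rho_φ φ) <= Krho.
Proof.
ell_pos; pose proof (Rabs_cos_le φ); pose proof (Rabs_sin_le φ).
assert (0 < / sh0 ^ 2) by (apply Rinv_0_lt_compat; nra).
assert (Hi2 : Rabs (/ sh0 ^ 2) <= / sh0 ^ 2) by (rewrite Rabs_right; lra).
assert (He2 : Rabs (e ^ 2) <= 1) by (rewrite Rabs_right; nra).
assert (Hr2 : Rabs 2 <= 2) by (rewrite Rabs_right; lra).
split.
- unfold rho, Rdiv; eapply Rle_trans; [bound_abs |]; simpl; nra.
- unfold rho_φ, Krho; eapply Rle_trans; [bound_abs |]; nra.
Qed.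

Ltac pose_local_bounds s φ eps :=
  destruct (Cs_Ss_bounds s eps) as [? [? [? [? ?]]]]; auto;
  destruct (coordinate_bounds s φ eps) as [? [? [? [? [? [? [? [? [? ?]]]]]]]]]; auto;
  destruct (rho_bounds φ); pose proof (Rabs_cos_le φ); pose proof (Rabs_sin_le φ).

(* [Lin] is the first variation of [Feq] at [s = 0] with respect to the parameters. *)
Definition Lin p q r w1 w2 φ :=
  2 * (cos φ * (p * cos φ + q * sin φ + w1) + sin φ * (q * cos φ + r * sin φ + w2)).
Definition Lin_φ p q r w1 w2 φ :=
  2 * (cos φ * (- p * sin φ + q * cos φ) - sin φ * (p * cos φ + q * sin φ + w1)
     + sin φ * (- q * sin φ + r * cos φ) + cos φ * (q * cos φ + r * sin φ + w2)).

Lemma Feq_expansion : exists K, forall p q r w1 w2 s φ eps,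
  Rabs s <= eps -> eps <= 1 -> Rabs p <= eps -> Rabs q <= eps -> Rabs r <= eps ->
  Rabs w1 <= eps -> Rabs w2 <= eps ->
  Rabs (Feq p q r w1 w2 s φ - (kappa * s * rho φ + Lin p q r w1 w2 φ)) <= K * eps ^ 2.
Proof.
eexists; intros p q r w1 w2 s φ eps Hs He1 Hp Hq Hr Hw1 Hw2.
pose_local_bounds s φ eps.
set (b1 := p * g1 s φ + q * g2 s φ + w1); set (b2 := q * g1 s φ + r * g2 s φ + w2).
replace (Feq p q r w1 w2 s φ - (kappa * s * rho φ + Lin p q r w1 w2 φ)) with
  (((Ss s - sh0) ^ 2 + 2 * sh0 * (Ss s - sh0 - ch0 * s)) * rho φ
   + 2 * ((g1 s φ - cos φ) * b1 + cos φ * (p * (g1 s φ - cos φ) + q * (g2 s φ - sin φ))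
          + (g2 s φ - sin φ) * b2 + sin φ * (q * (g1 s φ - cos φ) + r * (g2 s φ - sin φ)))
   + b1 ^ 2 + b2 ^ 2).
2:{ transitivity ((g1 s φ ^ 2 + g2 s φ ^ 2 - 1) - kappa * s * rho φ
      + 2 * (g1 s φ * b1 + g2 s φ * b2) + b1 ^ 2 + b2 ^ 2 - Lin p q r w1 w2 φ).
    - rewrite g_norm; unfold Lin, kappa, b1, b2; ring.
    - unfold Feq, X1, X2, b1, b2; ring. }
unfold b1, b2; eapply Rle_trans; [bound_abs |]; bound_homogeneous eps.
Qed.

Lemma Feq_φ_expansion : exists K, forall p q r w1 w2 s φ eps,
  Rabs s <= eps -> eps <= 1 -> Rabs p <= eps -> Rabs q <= eps -> Rabs r <= eps ->
  Rabs w1 <= eps -> Rabs w2 <= eps ->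
  Rabs (Feq_φ p q r w1 w2 s φ - (kappa * s * rho_φ φ + Lin_φ p q r w1 w2 φ)) <= K * eps ^ 2.
Proof.
eexists; intros p q r w1 w2 s φ eps Hs He1 Hp Hq Hr Hw1 Hw2.
pose_local_bounds s φ eps.
set (b1 := p * g1 s φ + q * g2 s φ + w1); set (b2 := q * g1 s φ + r * g2 s φ + w2).
set (b1' := p * g1_φ s φ + q * g2_φ s φ); set (b2' := q * g1_φ s φ + r * g2_φ s φ).
replace (Feq_φ p q r w1 w2 s φ - (kappa * s * rho_φ φ + Lin_φ p q r w1 w2 φ)) with
  (((Ss s - sh0) ^ 2 + 2 * sh0 * (Ss s - sh0 - ch0 * s)) * rho_φ φ
   + 2 * ((g1 s φ - cos φ) * b1' + cos φ * (p * (g1_φ s φ - - sin φ) + q * (g2_φ s φ - cos φ))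
        + b1 * (g1_φ s φ - - sin φ) + (- sin φ) * (p * (g1 s φ - cos φ) + q * (g2 s φ - sin φ))
        + b1 * b1'
        + (g2 s φ - sin φ) * b2' + sin φ * (q * (g1_φ s φ - - sin φ) + r * (g2_φ s φ - cos φ))
        + b2 * (g2_φ s φ - cos φ) + cos φ * (q * (g1 s φ - cos φ) + r * (g2 s φ - sin φ))
        + b2 * b2')).
2:{ transitivity (2 * (g1 s φ * g1_φ s φ + g2 s φ * g2_φ s φ) - kappa * s * rho_φ φ
      + 2 * (g1 s φ * b1' + b1 * g1_φ s φ + b1 * b1') + 2 * (g2 s φ * b2' + b2 * g2_φ s φ + b2 * b2')
      - Lin_φ p q r w1 w2 φ).
    - rewrite g_norm_φ; unfold Lin_φ, kappa, b1, b2, b1', b2'; ring.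
    - unfold Feq_φ, X1, X2, b1, b2, b1', b2'; ring. }
unfold b1, b2, b1', b2'; eapply Rle_trans; [bound_abs |]; bound_homogeneous eps.
Qed.

Lemma Feq_s_expansion : exists K, forall p q r w1 w2 s φ eps,
  Rabs s <= eps -> eps <= 1 -> Rabs p <= eps -> Rabs q <= eps -> Rabs r <= eps ->
  Rabs w1 <= eps -> Rabs w2 <= eps ->
  Rabs (Feq_s p q r w1 w2 s φ - kappa * rho φ) <= K * eps.
Proof.
eexists; intros p q r w1 w2 s φ eps Hs He1 Hp Hq Hr Hw1 Hw2.
ell_pos; pose_local_bounds s φ eps.
assert (He0 : 0 <= eps) by (pose proof (Rabs_pos p); lra).
assert (HK : 0 < Kcs) by (unfold Kcs; lra).
assert (HK' : 0 < Kcs * / sh0) by (apply Rmult_lt_0_compat; [lra | apply Rinv_0_lt_compat; lra]).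
assert (HX1 : Rabs (X1 p q w1 s φ) <= 2 * (Kcs + Kcs * / sh0 + 1)).
{ unfold X1; eapply Rle_trans; [bound_abs |]; nra. }
assert (HX2 : Rabs (X2 q r w2 s φ) <= 2 * (Kcs + Kcs * / sh0 + 1)).
{ unfold X2; eapply Rle_trans; [bound_abs |]; nra. }
replace (Feq_s p q r w1 w2 s φ - kappa * rho φ) with
  ((2 * (Cs s - ch0) * Ss s + 2 * ch0 * (Ss s - sh0)) * rho φ
   + 2 * (X1 p q w1 s φ * (p * g1_s s φ + q * g2_s s φ) + (p * g1 s φ + q * g2 s φ + w1) * g1_s s φ)
   + 2 * (X2 q r w2 s φ * (q * g1_s s φ + r * g2_s s φ) + (q * g1 s φ + r * g2 s φ + w2) * g2_s s φ)).
2:{ transitivity (2 * (g1 s φ * g1_s s φ + g2 s φ * g2_s s φ) - kappa * rho φ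
      + 2 * (X1 p q w1 s φ * (p * g1_s s φ + q * g2_s s φ) + (p * g1 s φ + q * g2 s φ + w1) * g1_s s φ)
      + 2 * (X2 q r w2 s φ * (q * g1_s s φ + r * g2_s s φ) + (q * g1 s φ + r * g2 s φ + w2) * g2_s s φ)).
    - rewrite g_norm_s; unfold kappa; ring.
    - unfold Feq_s, X1, X2; ring. }
eapply Rle_trans; [bound_abs |]; bound_homogeneous eps.
Qed.

Lemma Feq_sub_g_norm_le p q r w1 w2 s φ eps :
  0 <= eps -> eps <= 1 -> Rabs p <= eps -> Rabs q <= eps -> Rabs r <= eps ->
  Rabs w1 <= eps -> Rabs w2 <= eps ->
  Rabs (Feq p q r w1 w2 s φ - (g1 s φ ^ 2 + g2 s φ ^ 2 - 1)) <=
    26 * eps * (g1 s φ ^ 2 + g2 s φ ^ 2 + 1).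
Proof.
intros He0 He1 Hp Hq Hr Hw1 Hw2.
set (G := sqrt (g1 s φ ^ 2 + g2 s φ ^ 2)).
assert (HG2 : G ^ 2 = g1 s φ ^ 2 + g2 s φ ^ 2) by (unfold G; rewrite pow2_sqrt; nra).
assert (HG0 : 0 <= G) by apply sqrt_pos.
assert (Hg1 : Rabs (g1 s φ) <= G).
{ rewrite <- (Rabs_right G) by lra; apply Rsqr_le_abs_0; unfold Rsqr; nra. }
assert (Hg2 : Rabs (g2 s φ) <= G).
{ rewrite <- (Rabs_right G) by lra; apply Rsqr_le_abs_0; unfold Rsqr; nra. }
assert (Hr2 : Rabs 2 <= 2) by (rewrite Rabs_right; lra).
replace (Feq p q r w1 w2 s φ - (g1 s φ ^ 2 + g2 s φ ^ 2 - 1)) with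
  (2 * (g1 s φ * (p * g1 s φ + q * g2 s φ + w1) + g2 s φ * (q * g1 s φ + r * g2 s φ + w2))
   + (p * g1 s φ + q * g2 s φ + w1) ^ 2 + (q * g1 s φ + r * g2 s φ + w2) ^ 2)
  by (unfold Feq, X1, X2; ring).
eapply Rle_trans; [bound_abs |]; rewrite <- HG2.
(* the bound is quadratic in [G]; [2 G <= G ^ 2 + 1] absorbs the linear terms *)
assert (eps ^ 2 <= eps) by nra.
assert (eps ^ 2 * G ^ 2 <= eps * G ^ 2) by (apply Rmult_le_compat_r; nra).
assert (eps ^ 2 * G <= eps * G) by (apply Rmult_le_compat_r; nra).
assert (0 <= eps * (G - 1) ^ 2) by (apply Rmult_le_pos; [lra | apply pow2_ge_0]).
nra.
Qed.

Lemma Lin_le p q r w1 w2 φ eps :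
  Rabs p <= eps -> Rabs q <= eps -> Rabs r <= eps -> Rabs w1 <= eps -> Rabs w2 <= eps ->
  Rabs (Lin p q r w1 w2 φ) <= 24 * eps /\ Rabs (Lin_φ p q r w1 w2 φ) <= 24 * eps.
Proof.
intros Hp Hq Hr Hw1 Hw2.
pose proof (Rabs_cos_le φ); pose proof (Rabs_sin_le φ).
assert (Hr2 : Rabs 2 <= 2) by (rewrite Rabs_right; lra).
assert (0 <= eps) by (pose proof (Rabs_pos p); lra).
split.
- unfold Lin; eapply Rle_trans; [bound_abs |]; lra.
- unfold Lin_φ; rewrite <- !Ropp_mult_distr_l.
  eapply Rle_trans; [bound_abs |]; lra.
Qed.

Definition rho_min := Rmin (e ^ 2) (/ sh0 ^ 2).

Lemma rho_min_pos : 0 < rho_min.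
Proof. ell_pos; apply Rmin_pos; [nra | apply Rinv_0_lt_compat; nra]. Qed.

Lemma rho_ge φ : rho_min <= rho φ.
Proof.
ell_pos; pose proof (sin2_cos2 φ); unfold Rsqr in *.
pose proof (Rmin_l (e ^ 2) (/ sh0 ^ 2)); pose proof (Rmin_r (e ^ 2) (/ sh0 ^ 2)).
unfold rho, rho_min, Rdiv.
assert (0 < / sh0 ^ 2) by (apply Rinv_0_lt_compat; nra).
assert (Rmin (e ^ 2) (/ sh0 ^ 2) * cos φ ^ 2 <= e ^ 2 * cos φ ^ 2) by (apply Rmult_le_compat_r; nra).
assert (Rmin (e ^ 2) (/ sh0 ^ 2) * sin φ ^ 2 <= / sh0 ^ 2 * sin φ ^ 2) by (apply Rmult_le_compat_r; nra).
nra.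
Qed.

Lemma Ss_0 : Ss 0 = sh0.
Proof. unfold Ss; rewrite Rplus_0_r; apply sinh_mu0. Qed.

Lemma Ss_sq_lt s1 s2 : - mu0 e <= s1 -> s1 < s2 -> Ss s1 ^ 2 < Ss s2 ^ 2.
Proof.
intros H1 H2; unfold Ss.
assert (0 <= sinh (mu0 e + s1)).
{ rewrite <- sinh_0; destruct (Req_dec (mu0 e + s1) 0) as [-> | Hne]; [lra | left; apply sinh_lt; lra]. }
assert (sinh (mu0 e + s1) < sinh (mu0 e + s2)) by (apply sinh_lt; lra).
nra.
Qed.

Lemma Ss_sq_le s1 s2 : - mu0 e <= s1 -> s1 <= s2 -> Ss s1 ^ 2 <= Ss s2 ^ 2.
Proof.
intros H1 H2; destruct (Req_dec s1 s2) as [-> | Hne]; [lra |].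
left; apply Ss_sq_lt; lra.
Qed.

Definition mu_lin p q r w1 w2 φ := - Lin p q r w1 w2 φ / (kappa * rho φ).
Definition mu_lin_φ p q r w1 w2 φ :=
  - (Lin_φ p q r w1 w2 φ + kappa * rho_φ φ * mu_lin p q r w1 w2 φ) / (kappa * rho φ).

Lemma kappa_pos : 0 < kappa.
Proof. ell_pos; unfold kappa; nra. Qed.

Lemma kappa_rho_ge φ : kappa * rho_min <= kappa * rho φ.
Proof. apply Rmult_le_compat_l; [left; apply kappa_pos | apply rho_ge]. Qed.

Lemma mu_lin_derive p q r w1 w2 φ : is_derive (mu_lin p q r w1 w2) φ (mu_lin_φ p q r w1 w2 φ).
Proof.
ell_pos; pose proof kappa_pos; pose proof (rho_ge φ); pose proof rho_min_pos.
assert (Hrho : 0 < rho φ) by lra.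
unfold mu_lin_φ, mu_lin, Lin, Lin_φ, rho, rho_φ, kappa in *.
assert (E : e * (e * 1) * (cos φ * (cos φ * 1)) + sin φ * (sin φ * 1) * / (sh0 * (sh0 * 1))
  = e ^ 2 * cos φ ^ 2 + sin φ ^ 2 / sh0 ^ 2) by (field; neq0).
assert (E' : (e * cos φ * sh0) ^ 2 + sin φ ^ 2 = sh0 ^ 2 * (e ^ 2 * cos φ ^ 2 + sin φ ^ 2 / sh0 ^ 2))
  by (field; neq0).
auto_derive; rewrite E; [neq0 |].
field; rewrite E'; repeat split; try lra.
apply Rgt_not_eq, Rmult_lt_0_compat; nra.
Qed.

(** * The elliptic radius of the perturbed ellipse *)

Section RootEstimates.

Variables K1 K2 K3 : R.
Hypotheses (K1_pos : 0 < K1) (K3_pos : 0 < K3).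
Hypothesis Feq_approx : forall p q r w1 w2 s φ eps,
  Rabs s <= eps -> eps <= 1 -> Rabs p <= eps -> Rabs q <= eps -> Rabs r <= eps ->
  Rabs w1 <= eps -> Rabs w2 <= eps ->
  Rabs (Feq p q r w1 w2 s φ - (kappa * s * rho φ + Lin p q r w1 w2 φ)) <= K1 * eps ^ 2.
Hypothesis Feq_φ_approx : forall p q r w1 w2 s φ eps,
  Rabs s <= eps -> eps <= 1 -> Rabs p <= eps -> Rabs q <= eps -> Rabs r <= eps ->
  Rabs w1 <= eps -> Rabs w2 <= eps ->
  Rabs (Feq_φ p q r w1 w2 s φ - (kappa * s * rho_φ φ + Lin_φ p q r w1 w2 φ)) <= K2 * eps ^ 2.
Hypothesis Feq_s_approx : forall p q r w1 w2 s φ eps,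
  Rabs s <= eps -> eps <= 1 -> Rabs p <= eps -> Rabs q <= eps -> Rabs r <= eps ->
  Rabs w1 <= eps -> Rabs w2 <= eps ->
  Rabs (Feq_s p q r w1 w2 s φ - kappa * rho φ) <= K3 * eps.

(* On [|s| <= r0] the derivative [Feq_s] stays above [m_s]; outside this window
   [|g|^2 - 1] is at least [eta_plus] (resp. at most [- eta_minus]), which parameters
   of size [A <= delta0] cannot compensate.  [Kn] is the constant of the a priori bound
   [|nu| <= Kn A], and [KE0], [KE1] those of the [C^0] and [C^1] estimates. *)
Definition m_s := kappa * rho_min / 2.
Definition r0 := Rmin (/ 2) (Rmin (mu0 e / 2) (kappa * rho_min / (4 * (K1 + K3)))).
Definition eta_plus := (Ss r0 ^ 2 - sh0 ^ 2) * rho_min.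
Definition eta_minus := (sh0 ^ 2 - Ss (- r0) ^ 2) * rho_min.
Definition Kn := 48 / (kappa * rho_min) + 1.
Definition KE0 := K1 * Kn ^ 2 / (kappa * rho_min).
Definition KE1 := (K2 * Kn ^ 2 + kappa * Krho * KE0) / m_s
  + 24 * (1 + Krho / rho_min) * (K3 * Kn) / (m_s * (kappa * rho_min)).
Definition delta0 := Rmin (/ Kn) (Rmin (eta_plus / 208) (Rmin (eta_minus / 104)
  (Rmin (/ 52) (kappa * rho_min / (4 * K3))))).

Ltac root_pos := pose proof e_range; pose proof ch0_pos; pose proof sh0_pos; pose proof kappa_pos;
  pose proof rho_min_pos; pose proof mu0_pos.

Lemma r0_bounds : 0 < r0 /\ r0 <= / 2 /\ r0 < mu0 e /\ r0 * (K1 + K3) <= kappa * rho_min / 4.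
Proof.
root_pos; unfold r0.
pose proof (Rmin_l (/ 2) (Rmin (mu0 e / 2) (kappa * rho_min / (4 * (K1 + K3))))).
pose proof (Rmin_r (/ 2) (Rmin (mu0 e / 2) (kappa * rho_min / (4 * (K1 + K3))))).
pose proof (Rmin_l (mu0 e / 2) (kappa * rho_min / (4 * (K1 + K3)))).
pose proof (Rmin_r (mu0 e / 2) (kappa * rho_min / (4 * (K1 + K3)))).
repeat split; try lra.
- repeat apply Rmin_pos; try lra; apply Rdiv_lt_0_compat; nra.
- apply Rle_trans with (kappa * rho_min / (4 * (K1 + K3)) * (K1 + K3));
    [apply Rmult_le_compat_r; lra | apply Req_le; field; lra].
Qed.

Lemma eta_pos : 0 < eta_plus /\ 0 < eta_minus.
Proof.
root_pos; destruct r0_bounds as [Hr0 [_ [Hr0' _]]].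
unfold eta_plus, eta_minus; rewrite <- Ss_0; split; apply Rmult_lt_0_compat; try lra.
- pose proof (Ss_sq_lt 0 r0); lra.
- pose proof (Ss_sq_lt (- r0) 0); lra.
Qed.

Lemma Kn_ge1 : 1 <= Kn.
Proof. root_pos; unfold Kn; assert (0 < 48 / (kappa * rho_min)) by (apply Rdiv_lt_0_compat; nra); lra. Qed.

Lemma delta0_pos : 0 < delta0.
Proof.
root_pos; pose proof eta_pos; pose proof Kn_ge1; unfold delta0.
repeat apply Rmin_pos; try lra; try (apply Rdiv_lt_0_compat; nra).
apply Rinv_0_lt_compat; lra.
Qed.

Lemma delta0_le : delta0 <= / 4.
Proof.
unfold delta0.
eapply Rle_trans; [apply Rmin_r |]; eapply Rle_trans; [apply Rmin_r |].
eapply Rle_trans; [apply Rmin_r |]; eapply Rle_trans; [apply Rmin_l | lra].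
Qed.

Section Perturbation.

Variables p q r w1 w2 A : R.
Hypotheses (A_ge0 : 0 <= A) (A_le : A <= delta0).
Hypotheses (p_le : Rabs p <= A) (q_le : Rabs q <= A) (r_le : Rabs r <= A)
  (w1_le : Rabs w1 <= A) (w2_le : Rabs w2 <= A).

Lemma A_small : Kn * A <= 1 /\ A <= eta_plus / 208 /\ A <= eta_minus / 104 /\ A <= / 52 /\
  K3 * A <= kappa * rho_min / 4.
Proof.
root_pos; pose proof Kn_ge1; unfold delta0 in A_le.
repeat match type of A_le with
  | A <= Rmin ?a ?b => pose proof (Rle_trans _ _ _ A_le (Rmin_l a b));
                       apply (fun H => Rle_trans _ _ _ H (Rmin_r a b)) in A_le
  end.
repeat split; try lra.
- apply Rle_trans with (Kn * / Kn); [apply Rmult_le_compat_l; lra | rewrite Rinv_r; lra].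
- apply Rle_trans with (K3 * (kappa * rho_min / (4 * K3))); [apply Rmult_le_compat_l; lra |].
  apply Req_le; field; lra.
Qed.

Lemma Feq_pos_right φ s : r0 <= s -> 0 < Feq p q r w1 w2 s φ.
Proof.
intros Hs; root_pos; destruct A_small as [_ [HA [_ [HA' _]]]]; destruct r0_bounds as [Hr0 _].
pose proof (Feq_sub_g_norm_le p q r w1 w2 s φ A A_ge0 ltac:(lra) p_le q_le r_le w1_le w2_le) as HF.
pose proof (g_norm s φ) as EX; pose proof eta_pos.
assert (HX : eta_plus <= g1 s φ ^ 2 + g2 s φ ^ 2 - 1).
{ rewrite EX; unfold eta_plus.
  pose proof (Ss_sq_le r0 s ltac:(lra) Hs); pose proof (rho_ge φ).
  pose proof (Ss_sq_lt 0 r0 ltac:(lra) Hr0); rewrite Ss_0 in *.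
  apply Rmult_le_compat; lra. }
apply Rabs_le_between in HF; nra.
Qed.

Lemma Feq_neg_left φ s : - mu0 e <= s <= - r0 -> Feq p q r w1 w2 s φ < 0.
Proof.
intros Hs; root_pos; destruct A_small as [_ [_ [HA [HA' _]]]]; destruct r0_bounds as [Hr0 _].
pose proof (Feq_sub_g_norm_le p q r w1 w2 s φ A A_ge0 ltac:(lra) p_le q_le r_le w1_le w2_le) as HF.
pose proof (g_norm s φ) as EX; pose proof eta_pos.
assert (HX : g1 s φ ^ 2 + g2 s φ ^ 2 - 1 <= - eta_minus).
{ rewrite EX; unfold eta_minus.
  pose proof (Ss_sq_le s (- r0) ltac:(lra) ltac:(lra)); pose proof (rho_ge φ).
  pose proof (Ss_sq_lt (- r0) 0 ltac:(lra) ltac:(lra)); rewrite Ss_0 in *.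
  assert ((sh0 ^ 2 - Ss (- r0) ^ 2) * rho_min <= (sh0 ^ 2 - Ss s ^ 2) * rho φ)
    by (apply Rmult_le_compat; lra).
  lra. }
apply Rabs_le_between in HF; nra.
Qed.

Lemma Feq_s_ge s φ : - r0 <= s <= r0 -> m_s <= Feq_s p q r w1 w2 s φ.
Proof.
intros Hs; root_pos; destruct A_small as [_ [_ [_ [HA HA']]]]; destruct r0_bounds as [Hr0 [Hr0' [_ Hr0K]]].
set (eps := Rmax (Rabs s) A).
assert (Hse : Rabs s <= eps) by apply Rmax_l.
assert (HAe : A <= eps) by apply Rmax_r.
assert (He1 : eps <= r0 + A) by (apply Rmax_lub; [apply Rabs_le |]; lra).
pose proof (Feq_s_approx p q r w1 w2 s φ eps Hse ltac:(lra) ltac:(lra) ltac:(lra) ltac:(lra)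
  ltac:(lra) ltac:(lra)) as Happrox.
apply Rabs_le_between in Happrox; pose proof (kappa_rho_ge φ).
assert (K3 * eps <= K3 * (r0 + A)) by (apply Rmult_le_compat_l; lra).
unfold m_s; nra.
Qed.

Definition nu := root (Feq p q r w1 w2) (Feq_s p q r w1 w2) r0 (proj1 r0_bounds)
  (fun φ => Feq_neg_left φ (- r0) ltac:(pose proof r0_bounds; lra))
  (fun φ => Feq_pos_right φ r0 (Rle_refl r0)) (Feq_derive_s p q r w1 w2).

Lemma nu_bounds φ : - r0 <= nu φ <= r0.
Proof. apply root_bounds. Qed.

Lemma Feq_nu φ : Feq p q r w1 w2 (nu φ) φ = 0.
Proof. apply F_root. Qed.

Lemma nu_le φ : Rabs (nu φ) <= Kn * A.
Proof.
root_pos; pose proof Kn_ge1; destruct r0_bounds as [Hr0 [Hr0' [_ Hr0K]]].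
pose proof (nu_bounds φ) as Hv; pose proof (Feq_nu φ) as HF; set (v := nu φ) in *.
destruct (Rle_dec (Rabs v) A) as [Hle | Hgt]; [nra |].
assert (Hv1 : Rabs v <= r0) by (apply Rabs_le; lra).
pose proof (Feq_approx p q r w1 w2 v φ (Rabs v) (Rle_refl _) ltac:(lra) ltac:(lra) ltac:(lra)
  ltac:(lra) ltac:(lra) ltac:(lra)) as Happrox.
rewrite HF, Rminus_0_l, Rabs_Ropp in Happrox.
destruct (Lin_le p q r w1 w2 φ A p_le q_le r_le w1_le w2_le) as [HL _].
assert (Hlin : Rabs (kappa * v * rho φ) <= K1 * Rabs v ^ 2 + 24 * A).
{ replace (kappa * v * rho φ) with ((kappa * v * rho φ + Lin p q r w1 w2 φ) - Lin p q r w1 w2 φ)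
    by ring.
  eapply Rle_trans; [apply Rabs_triang |]; rewrite Rabs_Ropp; lra. }
pose proof (rho_ge φ).
rewrite !Rabs_mult, (Rabs_right kappa), (Rabs_right (rho φ)) in Hlin by lra.
(* the quadratic term is absorbed: [K1 |v| <= K1 r0 <= kappa rho_min / 4] *)
assert (Hc : kappa * rho_min * Rabs v <= 32 * A).
{ assert (K1 * Rabs v ^ 2 <= kappa * rho_min / 4 * Rabs v).
  { pose proof (Rabs_pos v).
    apply Rle_trans with (K1 * r0 * Rabs v).
    - replace (K1 * Rabs v ^ 2) with (K1 * Rabs v * Rabs v) by ring.
      apply Rmult_le_compat_r; [lra | apply Rmult_le_compat_l; lra].
    - apply Rmult_le_compat_r; [lra | nra]. }
  assert (kappa * rho_min * Rabs v <= kappa * Rabs v * rho φ).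
  { rewrite (Rmult_comm _ (Rabs v)), (Rmult_comm kappa (Rabs v)), Rmult_assoc.
    apply Rmult_le_compat_l; [apply Rabs_pos | apply kappa_rho_ge]. }
  lra. }
apply (Rmult_le_reg_l (kappa * rho_min)); [nra |].
unfold Kn; replace (kappa * rho_min * ((48 / (kappa * rho_min) + 1) * A))
  with (48 * A + kappa * rho_min * A) by (field; nra).
nra.
Qed.

Lemma nu_params_le φ : Rabs (nu φ) <= Kn * A /\ Kn * A <= 1 /\ Rabs p <= Kn * A /\
  Rabs q <= Kn * A /\ Rabs r <= Kn * A /\ Rabs w1 <= Kn * A /\ Rabs w2 <= Kn * A.
Proof.
pose proof Kn_ge1; destruct A_small as [HKn _].
assert (A <= Kn * A) by nra.
split; [apply nu_le | repeat split; lra].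
Qed.

Lemma Rabs_mu_lin_le φ : Rabs (mu_lin p q r w1 w2 φ) <= 24 * A / (kappa * rho_min).
Proof.
root_pos; unfold mu_lin; rewrite Rdiv_opp_l, Rabs_Ropp.
apply Rabs_div_le_lb; [nra | apply kappa_rho_ge |].
apply (Lin_le p q r w1 w2 φ A); assumption.
Qed.

Lemma nu_sub_mu_lin φ : Rabs (nu φ - mu_lin p q r w1 w2 φ) <= KE0 * A ^ 2.
Proof.
root_pos; pose proof (rho_ge φ).
destruct (nu_params_le φ) as [B1 [B2 [B3 [B4 [B5 [B6 B7]]]]]].
pose proof (Feq_approx p q r w1 w2 (nu φ) φ (Kn * A) B1 B2 B3 B4 B5 B6 B7) as Happrox.
rewrite Feq_nu, Rminus_0_l, Rabs_Ropp in Happrox.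
replace (nu φ - mu_lin p q r w1 w2 φ)
  with ((kappa * nu φ * rho φ + Lin p q r w1 w2 φ) / (kappa * rho φ))
  by (unfold mu_lin; field; neq0).
eapply Rle_trans; [apply Rabs_div_le_lb; [| apply kappa_rho_ge | exact Happrox]; nra |].
apply Req_le; unfold KE0; field; nra.
Qed.

Lemma nu_derive φ :
  is_derive nu φ (- Feq_φ p q r w1 w2 (nu φ) φ / Feq_s p q r w1 w2 (nu φ) φ).
Proof.
root_pos; apply (root_derive _ _ _ _ m_s); intros.
- unfold m_s; nra.
- apply Feq_s_ge; lra.
- apply Feq_derive_φ.
- apply Feq_s_continuous.
Qed.

Lemma Rabs_mu_lin_φ_num_le φ :
  Rabs (Lin_φ p q r w1 w2 φ + kappa * rho_φ φ * mu_lin p q r w1 w2 φ)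
    <= 24 * (1 + Krho / rho_min) * A.
Proof.
root_pos; pose proof (rho_bounds φ) as [_ Hrho].
destruct (Lin_le p q r w1 w2 φ A p_le q_le r_le w1_le w2_le) as [_ HL].
pose proof (Rabs_mu_lin_le φ).
eapply Rle_trans; [apply Rabs_triang |].
rewrite !Rabs_mult, (Rabs_right kappa) by lra.
assert (Rabs (rho_φ φ) * Rabs (mu_lin p q r w1 w2 φ) <= Krho * (24 * A / (kappa * rho_min)))
  by (apply Rmult_le_compat; auto using Rabs_pos).
apply Rle_trans with (24 * A + kappa * (Krho * (24 * A / (kappa * rho_min)))); [nra |].
apply Req_le; field; nra.
Qed.

Lemma Feq_φ_nu_sub_le φ :
  Rabs (Feq_φ p q r w1 w2 (nu φ) φ
        - (Lin_φ p q r w1 w2 φ + kappa * rho_φ φ * mu_lin p q r w1 w2 φ))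
    <= (K2 * Kn ^ 2 + kappa * Krho * KE0) * A ^ 2.
Proof.
root_pos; pose proof (rho_bounds φ) as [_ Hrho].
destruct (nu_params_le φ) as [B1 [B2 [B3 [B4 [B5 [B6 B7]]]]]].
pose proof (Feq_φ_approx p q r w1 w2 (nu φ) φ (Kn * A) B1 B2 B3 B4 B5 B6 B7).
pose proof (nu_sub_mu_lin φ).
replace (Feq_φ p q r w1 w2 (nu φ) φ - (Lin_φ p q r w1 w2 φ + kappa * rho_φ φ * mu_lin p q r w1 w2 φ))
  with ((Feq_φ p q r w1 w2 (nu φ) φ - (kappa * nu φ * rho_φ φ + Lin_φ p q r w1 w2 φ))
        + kappa * rho_φ φ * (nu φ - mu_lin p q r w1 w2 φ)) by ring.
eapply Rle_trans; [apply Rabs_triang |].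
rewrite !Rabs_mult, (Rabs_right kappa) by lra.
assert (Rabs (rho_φ φ) * Rabs (nu φ - mu_lin p q r w1 w2 φ) <= Krho * (KE0 * A ^ 2))
  by (apply Rmult_le_compat; auto using Rabs_pos).
apply Rle_trans with (K2 * (Kn * A) ^ 2 + kappa * (Krho * (KE0 * A ^ 2))); [nra |].
apply Req_le; ring.
Qed.

Lemma nu_derive_sub_mu_lin_φ φ :
  Rabs (- Feq_φ p q r w1 w2 (nu φ) φ / Feq_s p q r w1 w2 (nu φ) φ - mu_lin_φ p q r w1 w2 φ)
    <= KE1 * A ^ 2.
Proof.
root_pos; pose proof (rho_ge φ).
destruct (nu_params_le φ) as [B1 [B2 [B3 [B4 [B5 [B6 B7]]]]]].
pose proof (Feq_s_approx p q r w1 w2 (nu φ) φ (Kn * A) B1 B2 B3 B4 B5 B6 B7) as HE'.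
pose proof (Feq_s_ge (nu φ) φ (nu_bounds φ)) as HFs.
pose proof (Rabs_mu_lin_φ_num_le φ) as HN0; pose proof (Feq_φ_nu_sub_le φ) as HE.
set (N0 := Lin_φ p q r w1 w2 φ + kappa * rho_φ φ * mu_lin p q r w1 w2 φ) in *.
assert (Hm : 0 < m_s) by (unfold m_s; nra).
assert (Hmk : 0 < m_s * (kappa * rho_min)) by (apply Rmult_lt_0_compat; nra).
replace (- Feq_φ p q r w1 w2 (nu φ) φ / Feq_s p q r w1 w2 (nu φ) φ - mu_lin_φ p q r w1 w2 φ)
  with (- (Feq_φ p q r w1 w2 (nu φ) φ / Feq_s p q r w1 w2 (nu φ) φ - N0 / (kappa * rho φ)))
  by (unfold mu_lin_φ; fold N0; field; split; [neq0 | lra]).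
rewrite Rabs_Ropp.
eapply Rle_trans;
  [apply (Rdiv_sub_le _ _ _ _ m_s (kappa * rho_min)); auto; [nra | apply kappa_rho_ge] |].
apply Rle_trans with ((K2 * Kn ^ 2 + kappa * Krho * KE0) * A ^ 2 / m_s
  + 24 * (1 + Krho / rho_min) * A * (K3 * (Kn * A)) / (m_s * (kappa * rho_min))).
- apply Rplus_le_compat; unfold Rdiv; apply Rmult_le_compat_r;
    try (left; apply Rinv_0_lt_compat; lra); auto.
  assert (0 <= Krho / rho_min).
  { apply Rdiv_le_0_compat; [| lra].
    unfold Krho; assert (0 < / sh0 ^ 2) by (apply Rinv_0_lt_compat; nra); lra. }
  apply Rmult_le_compat; auto using Rabs_pos; lra.
- apply Req_le; unfold KE1; field; nra.
Qed.

Lemma nu_unique φ s : - mu0 e <= s -> Feq p q r w1 w2 s φ = 0 -> s = nu φ.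
Proof.
intros Hs HF; destruct (Rle_dec r0 s) as [H1 | H1].
- pose proof (Feq_pos_right φ s H1); lra.
- destruct (Rle_dec s (- r0)) as [H2 | H2].
  + pose proof (Feq_neg_left φ s (conj Hs H2)); lra.
  + apply root_unique with (m := m_s); auto; try lra.
    * pose proof r0_bounds; root_pos; unfold m_s; nra.
    * intros; apply Feq_s_ge; lra.
Qed.

Lemma nu_spec : exists nu : R -> R,
  periodic_C1 nu /\
  (forall φ, Feq p q r w1 w2 (nu φ) φ = 0) /\
  (forall φ s, - mu0 e <= s -> Feq p q r w1 w2 s φ = 0 -> s = nu φ) /\
  (forall φ, Rabs (nu φ - mu_lin p q r w1 w2 φ) <= (KE0 + KE1) * A ^ 2) /\
  (forall φ, Rabs (Derive nu φ - mu_lin_φ p q r w1 w2 φ) <= (KE0 + KE1) * A ^ 2).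
Proof.
assert (HKE1 : 0 <= KE1 * A ^ 2)
  by (eapply Rle_trans; [apply Rabs_pos | apply (nu_derive_sub_mu_lin_φ 0)]).
assert (HKE0 : 0 <= KE0 * A ^ 2) by (eapply Rle_trans; [apply Rabs_pos | apply (nu_sub_mu_lin 0)]).
assert (HDerive : forall φ, Derive nu φ = - Feq_φ p q r w1 w2 (nu φ) φ / Feq_s p q r w1 w2 (nu φ) φ)
  by (intros; apply is_derive_unique, nu_derive).
exists nu; repeat split.
- intros φ; symmetry; apply nu_unique; [| now rewrite Feq_periodic, Feq_nu].
  pose proof (nu_bounds φ); pose proof r0_bounds; lra.
- intros φ; eexists; apply nu_derive.
- intros φ; apply (continuous_ext (fun φ => - Feq_φ p q r w1 w2 (nu φ) φ / Feq_s p q r w1 w2 (nu φ) φ)).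
  + intros; symmetry; apply HDerive.
  + apply (root_derive_continuous _ _ _ _ m_s); intros.
    * root_pos; unfold m_s; nra.
    * apply Feq_s_ge; lra.
    * apply Feq_derive_φ.
    * apply Feq_s_continuous.
    * apply Feq_φ_continuous.
- apply Feq_nu.
- apply nu_unique.
- intros φ; pose proof (nu_sub_mu_lin φ); nra.
- intros φ; rewrite HDerive; pose proof (nu_derive_sub_mu_lin_φ φ); nra.
Qed.

End Perturbation.

End RootEstimates.

Lemma Feq_root_approx : exists K delta, 0 < delta <= / 4 /\
  forall p q r w1 w2 A, 0 <= A -> A <= delta ->
  Rabs p <= A -> Rabs q <= A -> Rabs r <= A -> Rabs w1 <= A -> Rabs w2 <= A ->
  exists nu : R -> R,
    periodic_C1 nu /\
    (forall φ, Feq p q r w1 w2 (nu φ) φ = 0) /\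
    (forall φ s, - mu0 e <= s -> Feq p q r w1 w2 s φ = 0 -> s = nu φ) /\
    (forall φ, Rabs (nu φ - mu_lin p q r w1 w2 φ) <= K * A ^ 2) /\
    (forall φ, Rabs (Derive nu φ - mu_lin_φ p q r w1 w2 φ) <= K * A ^ 2).
Proof.
destruct Feq_expansion as [K1 H1]; destruct Feq_φ_expansion as [K2 H2];
  destruct Feq_s_expansion as [K3 H3].
assert (Hpos : forall K : R, 0 < Rabs K + 1) by (intros K; pose proof (Rabs_pos K); lra).
assert (Hge : forall K : R, K <= Rabs K + 1) by (intros K; pose proof (Rle_abs K); lra).
exists (KE0 (Rabs K1 + 1) + KE1 (Rabs K1 + 1) K2 (Rabs K3 + 1)),
  (delta0 (Rabs K1 + 1) (Rabs K3 + 1)).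
split; [split; [apply delta0_pos | apply delta0_le]; auto |].
intros p q r w1 w2 A HA0 HA Hp Hq Hr Hw1 Hw2.
apply nu_spec; auto; intros.
- eapply Rle_trans; [apply H1; eauto | apply Rmult_le_compat_r; [apply pow2_ge_0 | auto]].
- eapply Rle_trans; [apply H3; eauto | apply Rmult_le_compat_r; [| auto]].
  pose proof (Rabs_pos s); lra.
Qed.

Definition affine_inv c p q r w1 w2 u v : R * R :=
  let D := (1 + p) * (1 + r) - q ^ 2 in
  (c * ch0 * ((1 + r) * (u - w1) - q * (v - w2)) / D,
   c * sh0 * ((1 + p) * (v - w2) - q * (u - w1)) / D).

Lemma X_eq_iff c p q r w1 w2 s φ u v : 0 < c -> (1 + p) * (1 + r) - q ^ 2 <> 0 ->
  (X1 p q w1 s φ = u /\ X2 q r w2 s φ = v) <->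
  (c * Cs s * cos φ, c * Ss s * sin φ) = affine_inv c p q r w1 w2 u v.
Proof.
intros Hc HD; ell_pos; unfold affine_inv, X1, X2, g1, g2; cbv zeta.
assert (HD' : (1 + p) * (1 + r) - q * q <> 0) by (contradict HD; rewrite <- HD; ring).
split.
- intros [<- <-]; f_equal; unfold ch0; field; repeat split; try exact HD; try exact HD'; neq0.
- intros Heq; injection Heq as Hx Hy.
  replace (e * Cs s * cos φ) with (c * Cs s * cos φ / (c * ch0)) by (unfold ch0; field; neq0).
  replace (Ss s * sin φ / sh0) with (c * Ss s * sin φ / (c * sh0)) by (field; neq0).
  rewrite Hx, Hy; split; unfold ch0; field; repeat split; try exact HD; try exact HD'; neq0.
Qed.

Lemma perturbed_curve_is_ellipse c p q r w1 w2 (nu : R -> R) : 0 < c ->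
  (1 + p) * (1 + r) - q ^ 2 <> 0 ->
  (forall φ, Feq p q r w1 w2 (nu φ) φ = 0) ->
  (forall φ s, - mu0 e <= s -> Feq p q r w1 w2 s φ = 0 -> s = nu φ) ->
  is_ellipse (perturbed_curve e c nu).
Proof.
intros Hc HD Hroot Huniq; ell_pos.
set (D := (1 + p) * (1 + r) - q ^ 2) in *.
exists (c * ch0 * (1 + r) / D), (- (c * ch0 * q) / D), (- (c * sh0 * q) / D),
  (c * sh0 * (1 + p) / D), (c * ch0 * (- (1 + r) * w1 + q * w2) / D),
  (c * sh0 * (q * w1 - (1 + p) * w2) / D).
assert (Hparam : forall t, affine_inv c p q r w1 w2 (cos t) (sin t) =
  (c * ch0 * (1 + r) / D * cos t + - (c * ch0 * q) / D * sin t + c * ch0 * (- (1 + r) * w1 + q * w2) / D,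
   - (c * sh0 * q) / D * cos t + c * sh0 * (1 + p) / D * sin t + c * sh0 * (q * w1 - (1 + p) * w2) / D))
  by (intros; unfold affine_inv; fold D; f_equal; field; auto).
split.
{ replace (c * ch0 * (1 + r) / D * (c * sh0 * (1 + p) / D) - - (c * ch0 * q) / D * (- (c * sh0 * q) / D))
    with (c ^ 2 * ch0 * sh0 / D) by (unfold D in *; field; auto).
  assert (0 < c ^ 2 * ch0 * sh0) by (repeat apply Rmult_lt_0_compat; nra).
  unfold Rdiv; apply Rmult_integral_contrapositive; split; [lra | now apply Rinv_neq_0_compat]. }
intros P; split.
- intros [φ ->].
  assert (HX : X1 p q w1 (nu φ) φ ^ 2 + X2 q r w2 (nu φ) φ ^ 2 = 1)
    by (pose proof (Hroot φ); unfold Feq in *; lra).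
  destruct (unit_circle_param _ _ HX) as [t [Hct Hst]].
  exists t; rewrite <- Hparam; apply X_eq_iff; auto.
- intros [t ->]; rewrite <- Hparam.
  destruct (elliptic_coordinates c (fst (affine_inv c p q r w1 w2 (cos t) (sin t)))
    (snd (affine_inv c p q r w1 w2 (cos t) (sin t))) Hc) as [mu [φ [Hmu [Hx Hy]]]].
  set (s := mu - mu0 e).
  assert (Hpt : (c * Cs s * cos φ, c * Ss s * sin φ) = affine_inv c p q r w1 w2 (cos t) (sin t)).
  { unfold Cs, Ss, s; replace (mu0 e + (mu - mu0 e)) with mu by ring.
    rewrite <- Hx, <- Hy; apply surjective_pairing. }
  destruct (proj2 (X_eq_iff c p q r w1 w2 s φ _ _ Hc HD) Hpt) as [HX1 HX2].
  assert (HF : Feq p q r w1 w2 s φ = 0).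
  { unfold Feq; rewrite HX1, HX2; pose proof (sin2_cos2 t); unfold Rsqr in *; lra. }
  exists φ; rewrite <- (Huniq φ s ltac:(unfold s; lra) HF); symmetry; exact Hpt.
Qed.

(** * Elliptic motions *)

Definition elliptic_motion a0 a1 b1 a2 b2 φ :=
  a0 * e_h e φ + a1 * e_tau1 e φ + b1 * e_tau2 e φ + a2 * e_hr e φ + b2 * e_r e φ.

Lemma one_sub_e_sq_cos_sq_pos φ : 0 < 1 - e ^ 2 * cos φ ^ 2.
Proof.
pose proof (COS_bound φ); assert (cos φ ^ 2 <= 1) by nra; assert (e ^ 2 < 1) by nra; nra.
Qed.

Lemma elliptic_motion_eq a0 a1 b1 a2 b2 φ :
  elliptic_motion a0 a1 b1 a2 b2 φ = trig2 a0 a1 b1 a2 b2 φ / (1 - e ^ 2 * cos φ ^ 2).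
Proof.
pose proof (one_sub_e_sq_cos_sq_pos φ).
unfold elliptic_motion, e_tau1, e_tau2, e_hr, e_r, e_h, trig2; rewrite cos_2a, sin_2a.
field; lra.
Qed.

Lemma Rabs_trig2_le a0 a1 b1 a2 b2 φ :
  Rabs (trig2 a0 a1 b1 a2 b2 φ) <= Rabs (elliptic_motion a0 a1 b1 a2 b2 φ).
Proof.
pose proof (one_sub_e_sq_cos_sq_pos φ); pose proof (COS_bound φ); ell_pos.
rewrite elliptic_motion_eq; unfold Rdiv.
rewrite Rabs_mult, Rabs_inv, (Rabs_right (1 - _)) by lra.
pose proof (Rabs_pos (trig2 a0 a1 b1 a2 b2 φ)).
assert (1 <= / (1 - e ^ 2 * cos φ ^ 2)) by (rewrite <- Rinv_1; apply Rinv_le_contravar; nra).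
nra.
Qed.

(* [kappa * rho φ = 2 (1 - e^2 cos^2 φ) / Tm], which turns [mu_lin] into an elliptic motion. *)
Definition Tm := sh0 * e.

Lemma elliptic_motion_eq_mu_lin a0 a1 b1 a2 b2 φ :
  elliptic_motion a0 a1 b1 a2 b2 φ =
  mu_lin (- (a0 + a2) / Tm) (- b2 / Tm) (- (a0 - a2) / Tm) (- a1 / Tm) (- b1 / Tm) φ.
Proof.
ell_pos; pose proof (one_sub_e_sq_cos_sq_pos φ).
assert (Hcs : cos φ ^ 2 + sin φ ^ 2 = 1) by (pose proof (sin2_cos2 φ); unfold Rsqr in *; lra).
assert (HkT : kappa * rho φ = 2 * (1 - e ^ 2 * cos φ ^ 2) / Tm).
{ transitivity (2 * (sh0 ^ 2 * e ^ 2 * cos φ ^ 2 + sin φ ^ 2) / Tm).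
  - unfold Tm, kappa, rho, ch0; field; neq0.
  - rewrite sh0_sq; replace (sin φ ^ 2) with (1 - cos φ ^ 2) by lra; field; unfold Tm; neq0. }
rewrite elliptic_motion_eq; unfold mu_lin; rewrite HkT; unfold Lin, trig2, Tm.
replace a0 with (a0 * (cos φ ^ 2 + sin φ ^ 2)) at 1 by (rewrite Hcs; ring).
field; neq0.
Qed.

Lemma Tm_pos : 0 < Tm.
Proof. ell_pos; unfold Tm; nra. Qed.

Definition motion_size a0 a1 b1 a2 b2 :=
  2 * (Rabs a0 + Rabs a1 + Rabs b1 + Rabs a2 + Rabs b2) / Tm.

Lemma motion_params_le a0 a1 b1 a2 b2 (A := motion_size a0 a1 b1 a2 b2) :
  0 <= A /\ Rabs (- (a0 + a2) / Tm) <= A /\ Rabs (- b2 / Tm) <= A /\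
  Rabs (- (a0 - a2) / Tm) <= A /\ Rabs (- a1 / Tm) <= A /\ Rabs (- b1 / Tm) <= A.
Proof.
pose proof Tm_pos.
pose proof (Rabs_pos a0); pose proof (Rabs_pos a1); pose proof (Rabs_pos b1);
  pose proof (Rabs_pos a2); pose proof (Rabs_pos b2).
assert (HA : forall x, Rabs x <= 2 * (Rabs a0 + Rabs a1 + Rabs b1 + Rabs a2 + Rabs b2) ->
  Rabs (- x / Tm) <= A).
{ intros x Hx; unfold A, motion_size, Rdiv.
  rewrite Rabs_mult, Rabs_Ropp, Rabs_inv, (Rabs_right Tm) by lra.
  apply Rmult_le_compat_r; [left; apply Rinv_0_lt_compat |]; lra. }
pose proof (Rabs_triang a0 a2); pose proof (Rabs_triang a0 (- a2)); rewrite Rabs_Ropp in *.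
repeat split; try (apply HA; unfold Rminus; lra).
unfold A, motion_size, Rdiv; apply Rmult_le_pos; [lra | left; apply Rinv_0_lt_compat; lra].
Qed.

Lemma motion_size_le a0 a1 b1 a2 b2 n :
  (forall φ, Rabs (elliptic_motion a0 a1 b1 a2 b2 φ) <= n) -> motion_size a0 a1 b1 a2 b2 <= 20 * n / Tm.
Proof.
intros Hn; pose proof Tm_pos.
destruct (trig2_coeffs_le a0 a1 b1 a2 b2 n) as [B0 [B1 [B2 [B3 B4]]]].
{ intros φ; eapply Rle_trans; [apply Rabs_trig2_le | apply Hn]. }
unfold motion_size, Rdiv; apply Rmult_le_compat_r; [left; apply Rinv_0_lt_compat |]; lra.
Qed.

Lemma elliptic_motion_sub_le a0 a1 b1 a2 b2 (nu : R -> R) B :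
  (forall x, ex_derive nu x) ->
  (forall φ, Rabs (nu φ - mu_lin (- (a0 + a2) / Tm) (- b2 / Tm) (- (a0 - a2) / Tm)
                                 (- a1 / Tm) (- b1 / Tm) φ) <= B) ->
  (forall φ, Rabs (Derive nu φ - mu_lin_φ (- (a0 + a2) / Tm) (- b2 / Tm) (- (a0 - a2) / Tm)
                                          (- a1 / Tm) (- b1 / Tm) φ) <= B) ->
  forall φ, Rabs (elliptic_motion a0 a1 b1 a2 b2 φ - nu φ) <= B /\
    Rabs (Derive (fun φ => elliptic_motion a0 a1 b1 a2 b2 φ - nu φ) φ) <= B.
Proof.
intros Hex Hnu Hdnu φ.
assert (Hmu : forall ψ, elliptic_motion a0 a1 b1 a2 b2 ψ
  = mu_lin (- (a0 + a2) / Tm) (- b2 / Tm) (- (a0 - a2) / Tm) (- a1 / Tm) (- b1 / Tm) ψ)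
  by (intros; apply elliptic_motion_eq_mu_lin).
assert (Hd : forall ψ, is_derive (elliptic_motion a0 a1 b1 a2 b2) ψ
  (mu_lin_φ (- (a0 + a2) / Tm) (- b2 / Tm) (- (a0 - a2) / Tm) (- a1 / Tm) (- b1 / Tm) ψ)).
{ intros ψ; eapply is_derive_ext; [intros; symmetry; apply Hmu | apply mu_lin_derive]. }
split.
- rewrite Hmu, Rabs_minus_sym; apply Hnu.
- rewrite Derive_minus, (is_derive_unique _ _ _ (Hd φ)), Rabs_minus_sym; auto.
  eexists; apply Hd.
Qed.

Lemma elliptic_motion_perturbation c : 0 < c -> exists K delta, 0 <= K /\ 0 < delta /\
  forall a0 a1 b1 a2 b2, Rabs a0 <= delta -> Rabs a1 <= delta -> Rabs b1 <= delta ->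
    Rabs a2 <= delta -> Rabs b2 <= delta ->
  exists nu : R -> R, periodic_C1 nu /\ is_ellipse (perturbed_curve e c nu) /\
    forall n, (forall φ, Rabs (elliptic_motion a0 a1 b1 a2 b2 φ) <= n) -> forall φ,
      Rabs (elliptic_motion a0 a1 b1 a2 b2 φ - nu φ) <= K * n ^ 2 /\
      Rabs (Derive (fun φ => elliptic_motion a0 a1 b1 a2 b2 φ - nu φ) φ) <= K * n ^ 2.
Proof.
intros Hc; pose proof Tm_pos.
destruct Feq_root_approx as [K [delta [[Hd Hd4] Hroot]]].
exists (400 * Rabs K / Tm ^ 2), (delta * Tm / 10); repeat split.
{ apply Rdiv_le_0_compat; [pose proof (Rabs_pos K); lra | nra]. }
{ apply Rdiv_lt_0_compat; nra. }
intros a0 a1 b1 a2 b2 Ha0 Ha1 Hb1 Ha2 Hb2.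
destruct (motion_params_le a0 a1 b1 a2 b2) as [HA0 [Hp [Hq [Hr [Hw1 Hw2]]]]].
set (A := motion_size a0 a1 b1 a2 b2) in *.
assert (HAd : A <= delta).
{ unfold A, motion_size; apply (Rmult_le_reg_r Tm); [lra |].
  replace (2 * (Rabs a0 + Rabs a1 + Rabs b1 + Rabs a2 + Rabs b2) / Tm * Tm)
    with (2 * (Rabs a0 + Rabs a1 + Rabs b1 + Rabs a2 + Rabs b2)) by (field; lra); lra. }
destruct (Hroot _ _ _ _ _ A HA0 HAd Hp Hq Hr Hw1 Hw2) as [nu [HC1 [Hzero [Huniq [Hnu Hdnu]]]]].
exists nu; split; [exact HC1 | split].
- eapply perturbed_curve_is_ellipse; eauto.
  apply Rabs_le_between in Hp, Hq, Hr; nra.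
- intros n Hn.
  assert (HAn : A <= 20 * n / Tm) by now apply motion_size_le.
  assert (HKA : K * A ^ 2 <= 400 * Rabs K / Tm ^ 2 * n ^ 2).
  { apply Rle_trans with (Rabs K * A ^ 2);
      [apply Rmult_le_compat_r; [apply pow2_ge_0 | apply Rle_abs] |].
    apply Rle_trans with (Rabs K * (20 * n / Tm) ^ 2);
      [apply Rmult_le_compat_l; [apply Rabs_pos | apply pow_incr; lra] |].
    apply Req_le; field; lra. }
  apply elliptic_motion_sub_le; [apply HC1 | |]; intros φ;
    (eapply Rle_trans; [apply Hnu || apply Hdnu | exact HKA]).
Qed.

End EllipticCoordinates.

Theorem proposition3 (e0 c : R) (he0 : 0 < e0 < 1) (hc : 0 < c) :
  exists (C delta : R), 0 < delta /\
    forall a0 a1 b1 a2 b2 : R,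
      Rabs a0 <= delta -> Rabs a1 <= delta -> Rabs b1 <= delta ->
      Rabs a2 <= delta -> Rabs b2 <= delta ->
      let mu1 := fun phi => a0 * e_h e0 phi + a1 * e_tau1 e0 phi
                 + b1 * e_tau2 e0 phi + a2 * e_hr e0 phi + b2 * e_r e0 phi in
      exists nu : R -> R,
        periodic_C1 nu /\
        is_ellipse (perturbed_curve e0 c nu) /\
        Rbar_le (C1norm (fun phi => mu1 phi - nu phi))
                (Rbar_mult (Finite C) (Rbar_mult (C1norm mu1) (C1norm mu1))).
Proof.
destruct (elliptic_motion_perturbation e0 he0 c hc) as [K [delta [HK [Hdelta Happrox]]]].
exists (2 * K + 1), delta; split; [exact Hdelta |].
intros a0 a1 b1 a2 b2 Ha0 Ha1 Hb1 Ha2 Hb2 mu1.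
destruct (Happrox a0 a1 b1 a2 b2 Ha0 Ha1 Hb1 Ha2 Hb2) as [nu [HC1 [Hellipse Hestimate]]].
exists nu; split; [exact HC1 | split; [exact Hellipse |]].
now apply C1norm_le_sq.
Qed.
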